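(* Assume (H2) and additionally that $g$ is bounded, $\|g\|_\infty:=\sup_y|g(y)|<\infty$. Let $x\in\mathcal C^{p\text{-var}}([a,b],\mathbb R^m)$ and let $y$ be the solution on $[a,b]$ of $y_t=y_a+\int_a^t[Ay_s+f(y_s)]ds+\int_a^tg(y_s)dx_s$. Then $$\|y\|_{p\text{-var},[a,b]}\le\Big[\|y_a\|+\Big(\tfrac{\|f(0)\|}{L}\vee2\|g\|_\infty\Big)\big(1+|||x|||_{p\text{-var},[a,b]}\big)N_{[a,b]}(x)\Big]e^{2L(b-a)}N_{[a,b]}(x)^{\frac{p-1}{p}}.$$
   Context: Fix $d,m\ge1$ and $p\in(1,2)$. For a path $x:[a,b]\to\mathbb R^r$: $|||x|||_{p\text{-var},[a,b]}=\big(\sup_{\Pi}\sum_i\|x_{t_{i+1}}-x_{t_i}\|^p\big)^{1/p}$ over finite partitions of $[a,b]$; $\|x\|_{p\text{-var},[a,b]}=\|x_a\|+|||x|||_{p\text{-var},[a,b]}$. Integrals against $dx$ are Young integrals. $A\in\mathbb R^{d\times d}$ with operator norm $|A|$. (H2): $f:\mathbb R^d\to\mathbb R^d$, $g:\mathbb R^d\to\mathbb R^{d\times m}$ globally Lipschitz with constants $C_f$, $C_g>0$; $g\in C^1$ with $Dg$ globally Lipschitz. $L=|A|+C_f$, $K=(1-2^{1-2/p})^{-1}$, $a\vee b=\max\{a,b\}$. Greedy times: $\gamma=\frac1{2(K+1)C_g}$, $\tau_0=a$, $\tau_{k+1}=\inf\{t>\tau_k:|||x|||_{p\text{-var},[\tau_k,t]}=\gamma\}\wedge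 b$, $N_{[a,b]}(x)=\min\{k\ge1:\tau_k=b\}$. *)

From Stdlib Require Import Reals Lra List ClassicalEpsilon Classical.
Open Scope R_scope.

(** Vectors of R^n are represented as [nat -> R] (only the first n
    coordinates matter), d x m matrices as [nat -> nat -> R]. *)
Definition vec := nat -> R.
Definition mat := nat -> nat -> R.

Fixpoint sumR (n : nat) (f : nat -> R) : R :=
  match n with O => 0 | S k => sumR k f + f k end.

Definition vzero : vec := fun _ => 0.
Definition vadd (u v : vec) : vec := fun i => u i + v i.
Definition vsub (u v : vec) : vec := fun i => u i - v i.
Definition msub (M N : mat) : mat := fun i j => M i j - N i j.

Definition vnorm (n : nat) (v : vec) : R := sqrt (sumR n (fun i => v i ^ 2)).

Definition mvmul (c : nat) (M : mat) (v : vec) : vec :=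
  fun i => sumR c (fun j => M i j * v j).

(** Supremum of a set of reals (0 if empty or unbounded above);
    infimum likewise. *)
Definition Rsup (E : R -> Prop) : R :=
  match excluded_middle_informative (bound E /\ exists x, E x) with
  | left H => proj1_sig (completeness E (proj1 H) (proj2 H))
  | right _ => 0
  end.
Definition Rinf (E : R -> Prop) : R := - Rsup (fun x => E (- x)).

Definition opnorm (r c : nat) (M : mat) : R :=
  Rsup (fun s => exists v, vnorm c v <= 1 /\ s = vnorm r (mvmul c M v)).

(** Real power x^q for x >= 0 (with 0^q = 0). *)
Definition rpow (x q : R) : R := if Rle_dec x 0 then 0 else Rpower x q.

(** A partition a = t_0 < t_1 < ... < t_n = b of [a,b] is encoded by the
    list [t_1; ...; t_n] (empty iff a = b). *)
Fixpoint chain_lt (t0 : R) (l : list R) : Prop :=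
  match l with nil => True | t1 :: l' => t0 < t1 /\ chain_lt t1 l' end.
Definition is_partition (a b : R) (l : list R) : Prop :=
  chain_lt a l /\ last l a = b.

Fixpoint mesh (t0 : R) (l : list R) : R :=
  match l with nil => 0 | t1 :: l' => Rmax (t1 - t0) (mesh t1 l') end.

Fixpoint psum (r : nat) (p : R) (x : R -> vec) (t0 : R) (l : list R) : R :=
  match l with
  | nil => 0
  | t1 :: l' => rpow (vnorm r (vsub (x t1) (x t0))) p + psum r p x t1 l'
  end.

Definition psums (r : nat) (p : R) (x : R -> vec) (a b : R) : R -> Prop :=
  fun s => exists l, is_partition a b l /\ s = psum r p x a l.

Definition pvar_semi (r : nat) (p : R) (x : R -> vec) (a b : R) : R :=
  rpow (Rsup (psums r p x a b)) (1 / p).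

Definition pvar_norm (r : nat) (p : R) (x : R -> vec) (a b : R) : R :=
  vnorm r (x a) + pvar_semi r p x a b.

Definition in_Cpvar (r : nat) (p : R) (x : R -> vec) (a b : R) : Prop :=
  (forall t, a <= t <= b -> forall eps, 0 < eps -> exists delta, 0 < delta /\
     forall s, a <= s <= b -> Rabs (s - t) < delta ->
       vnorm r (vsub (x s) (x t)) < eps)
  /\ bound (psums r p x a b).

Fixpoint rs_sum (c : nat) (H : R -> mat) (X : R -> vec) (t0 : R) (l : list R)
  : vec :=
  match l with
  | nil => vzero
  | t1 :: l' => vadd (mvmul c (H t0) (vsub (X t1) (X t0))) (rs_sum c H X t1 l')
  end.

(** I = int_a^b H(s) dX(s) as the limit of Riemann-Stieltjes sums when the
    mesh tends to 0 (Young integral; for X(s) = s the usual integral). *)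
Definition RS_integral (d c : nat) (H : R -> mat) (X : R -> vec) (a b : R)
  (I : vec) : Prop :=
  forall eps, 0 < eps -> exists delta, 0 < delta /\
    forall l, is_partition a b l -> mesh a l < delta ->
      vnorm d (vsub (rs_sum c H X a l) I) < eps.

Definition is_solution (d m : nat) (A : mat) (f : vec -> vec) (g : vec -> mat)
  (x : R -> vec) (a b : R) (y : R -> vec) : Prop :=
  forall t, a <= t <= b ->
    exists I1 I2 : vec,
      RS_integral d 1 (fun s => fun i _ => vadd (mvmul d A (y s)) (f (y s)) i)
                  (fun s => fun _ => s) a t I1
      /\ RS_integral d m (fun s => g (y s)) x a t I2
      /\ forall i, (i < d)%nat -> y t i = y a i + I1 i + I2 i.

Definition lipschitz_f (d : nat) (f : vec -> vec) (Cf : R) : Prop :=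
  forall u v, vnorm d (vsub (f u) (f v)) <= Cf * vnorm d (vsub u v).
Definition lipschitz_g (d m : nat) (g : vec -> mat) (Cg : R) : Prop :=
  forall u v, opnorm d m (msub (g u) (g v)) <= Cg * vnorm d (vsub u v).
(** g is C^1 (Frechet) with globally Lipschitz derivative Dg; Dg u is the
    tensor (i,j,k) |-> d g_{ij} / d u_k (u). *)
Definition C1_Lip_deriv (d m : nat) (g : vec -> mat) : Prop :=
  exists Dg : vec -> nat -> nat -> nat -> R,
    (forall u eps, 0 < eps -> exists delta, 0 < delta /\
       forall h, vnorm d h < delta ->
         opnorm d m (fun i j => g (vadd u h) i j - g u i j
                                 - sumR d (fun k => Dg u i j k * h k))
         <= eps * vnorm d h)
    /\ exists CD, forall u v i j k, (i < d)%nat -> (j < m)%nat -> (k < d)%nat ->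
         Rabs (Dg u i j k - Dg v i j k) <= CD * vnorm d (vsub u v).

Definition sup_norm_g (d m : nat) (g : vec -> mat) : R :=
  Rsup (fun s => exists u, s = opnorm d m (g u)).

Definition Kp (p : R) : R := / (1 - Rpower 2 (1 - 2 / p)).
Definition gammaG (p Cg : R) : R := 1 / (2 * (Kp p + 1) * Cg).

(** Greedy times: tau_{k+1} = inf{t > tau_k : |||x|||_{[tau_k,t]} = gamma} /\ b
    (inf of the empty set = +oo). *)
Definition greedy_next (r : nat) (p gam : R) (x : R -> vec) (b s : R) : R :=
  let E := fun t => s < t <= b /\ pvar_semi r p x s t = gam in
  match excluded_middle_informative (exists t, E t) with
  | left _ => Rmin (Rinf E) b
  | right _ => b
  end.

Fixpoint tau (r : nat) (p gam : R) (x : R -> vec) (a b : R) (k : nat) : R :=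
  match k with
  | O => a
  | S k' => greedy_next r p gam x b (tau r p gam x a b k')
  end.

Definition is_N (r : nat) (p gam : R) (x : R -> vec) (a b : R) (n : nat) : Prop :=
  (1 <= n)%nat /\ tau r p gam x a b n = b /\
  forall k, (1 <= k)%nat -> (k < n)%nat -> tau r p gam x a b k <> b.

(** The argument: (1) real powers, Minkowski's inequality and zeta sums give the
    Young-Loeve estimate for Riemann-Stieltjes sums, with constant [K + 1];
    (2) the p-variation is written through its control [w(s,t)], which is
    superadditive and, for continuous [x], continuous in [t], so the greedy times
    cut [[a,b]] into blocks with [|||x||| <= gamma] and [(K+1) C_g gamma = 1/2];
    (3) on such a block the rough term of the equation is absorbed, and a
    bootstrap in small time steps against an exponential comparison function
    gives [||y_u|| + |||y|||_[u,v] <= (||y_u|| + Lambda (1 + |||x|||)) e^(2L(v-u))]. *)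

From Stdlib Require Import Reals Lra Lia List Classical ClassicalEpsilon FunctionalExtensionality.
From Coquelicot Require Import Coquelicot.
Open Scope R_scope.

Lemma rpow_nonneg x q : 0 <= rpow x q.
Proof.
  unfold rpow. destruct (Rle_dec x 0). lra. unfold Rpower. left; apply exp_pos.
Qed.

Lemma rpow_pos x q : 0 < x -> rpow x q = Rpower x q.
Proof.
  intros. unfold rpow. destruct (Rle_dec x 0). lra. auto.
Qed.

Lemma rpow_pos' x q : 0 < x -> 0 < rpow x q.
Proof.
  intros. rewrite rpow_pos; auto. unfold Rpower; apply exp_pos.
Qed.

Lemma rpow_0 q : rpow 0 q = 0.
Proof.
  unfold rpow. destruct (Rle_dec 0 0). auto. lra.
Qed.

Lemma rpow_1 x : 0 <= x -> rpow x 1 = x.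
Proof.
  intros. destruct (Req_dec x 0). subst; apply rpow_0.
  rewrite rpow_pos by lra. apply Rpower_1; lra.
Qed.

Lemma rpow_one q : rpow 1 q = 1.
Proof.
  rewrite rpow_pos by lra. unfold Rpower. rewrite ln_1, Rmult_0_r, exp_0. auto.
Qed.

Lemma rpow_mono x y q : 0 <= q -> 0 <= x <= y -> rpow x q <= rpow y q.
Proof.
  intros Hq Hxy. destruct (Req_dec x 0). subst; rewrite rpow_0; apply rpow_nonneg.
  rewrite !rpow_pos by lra. apply Rle_Rpower_l; lra.
Qed.

Lemma rpow_ge1 n q : 1 <= n -> 0 <= q -> 1 <= rpow n q.
Proof.
  intros Hn Hq. rewrite <- (rpow_one q). apply rpow_mono; lra.
Qed.

Lemma rpow_mul x y q : 0 <= x -> 0 <= y -> rpow (x*y) q = rpow x q * rpow y q.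
Proof.
  intros. destruct (Req_dec x 0). subst. rewrite Rmult_0_l, rpow_0; ring.
  destruct (Req_dec y 0). subst. rewrite Rmult_0_r, rpow_0; ring.
  rewrite !rpow_pos by nra. rewrite Rpower_mult_distr; auto; lra.
Qed.

Lemma rpow_rpow x q r : 0 <= x -> 0 < q -> rpow (rpow x q) r = rpow x (q*r).
Proof.
  intros. destruct (Req_dec x 0). subst. rewrite !rpow_0; auto.
  rewrite (rpow_pos x) by lra. rewrite rpow_pos. rewrite rpow_pos by lra. apply Rpower_mult.
  unfold Rpower; apply exp_pos.
Qed.

Lemma rpow_inv x q : 0 <= x -> 0 < q -> rpow (rpow x q) (1/q) = x.
Proof.
  intros. rewrite rpow_rpow by auto. replace (q * (1/q)) with 1 by (field; lra).
  apply rpow_1; auto.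
Qed.

Lemma rpow_inv' x q : 0 <= x -> 0 < q -> rpow (rpow x (1/q)) q = x.
Proof.
  intros. rewrite rpow_rpow by (auto; apply Rdiv_lt_0_compat; lra).
  replace ((1/q)*q) with 1 by (field; lra).
  apply rpow_1; auto.
Qed.

Lemma rpow_plus x q r : 0 < x -> rpow x (q + r) = rpow x q * rpow x r.
Proof.
  intros. rewrite !rpow_pos by auto. apply Rpower_plus.
Qed.

Lemma rpow_div a U q : 0 <= a -> 0 < U -> rpow (a/U) q = rpow a q / rpow U q.
Proof.
  intros. assert (0 < rpow U q) by (apply rpow_pos'; auto).
  assert (rpow a q = rpow (a/U) q * rpow U q). { rewrite <- rpow_mul. f_equal. field; lra.
   apply Rmult_le_pos; auto; left; apply Rinv_0_lt_compat; lra. lra. }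
  rewrite H2. field. lra.
Qed.

Lemma rpow_zero_inv x q : 0 <= x -> rpow x q <= 0 -> x = 0.
Proof.
  intros. destruct (Req_dec x 0); auto. pose proof (rpow_pos' x q). lra.
Qed.

Lemma rpow_inv_sq K p : 1 <= K -> 0 < p -> rpow (/ (K^2)) (1/p) = rpow K (-(2/p)).
Proof.
  intros. rewrite !rpow_pos. unfold Rpower. f_equal. rewrite ln_Rinv. rewrite ln_pow by lra.
  simpl. field. lra. apply pow_lt; lra. lra. apply Rinv_0_lt_compat, pow_lt; lra.
Qed.

(** Bernoulli's inequality in exponential form, [1 + q(e^s - 1) <= e^(qs)]
    for [q >= 1] or [q <= 0], from the sign of the derivative of the difference. *)
Lemma exp_bernoulli q s : (1 <= q \/ q <= 0) -> 1 + q * (exp s - 1) <= exp (q*s).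
Proof.
  intros Hq.
  set (f := fun s => exp (q*s) - 1 - q*(exp s - 1)).
  assert (Hd : forall c, derivable_pt_lim f c (q*exp(q*c) - q*exp c)).
  { intro c. apply is_derive_Reals. unfold f. auto_derive. auto. ring. }
  assert (Hf0 : f 0 = 0). { unfold f. rewrite Rmult_0_r, exp_0. ring. }
  enough (0 <= f s) by (unfold f in H; lra).
  destruct (Rtotal_order s 0) as [Hs|[Hs|Hs]].
  - destruct (MVT_cor2 f _ s 0 Hs (fun c _ => Hd c)) as [c [Hc1 Hc2]].
    assert (q * exp (q*c) - q * exp c <= 0).
    { destruct Hq.
      - assert (exp (q*c) <= exp c). { destruct (Req_dec (q*c) c). rewrite H0; lra.
        left; apply exp_increasing. nra. }
        nra.
      - assert (exp c <= exp (q*c)). { destruct (Req_dec (q*c) c). rewrite H0; lra.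
        left; apply exp_increasing. nra. }
        nra. }
    nra.
  - subst. lra.
  - destruct (MVT_cor2 f _ 0 s Hs (fun c _ => Hd c)) as [c [Hc1 Hc2]].
    assert (0 <= q * exp (q*c) - q * exp c).
    { destruct Hq.
      - assert (exp c <= exp (q*c)). { destruct (Req_dec (q*c) c). rewrite H0; lra.
        left; apply exp_increasing. nra. }
        nra.
      - assert (exp (q*c) <= exp c). { destruct (Req_dec (q*c) c). rewrite H0; lra.
        left; apply exp_increasing. nra. }
        nra. }
    nra.
Qed.

Lemma bernoulli t q : 0 < t -> (1 <= q \/ q <= 0) -> 1 + q * (t - 1) <= rpow t q.
Proof.
  intros. rewrite rpow_pos by auto. unfold Rpower.
  pose proof (exp_bernoulli q (ln t) H0). rewrite exp_ln in H1 by auto.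
  replace (ln t * q) with (q * ln t) in * by ring. lra.
Qed.

Lemma tangent q x w : 1 <= q -> 0 <= x -> 0 <= w ->
  rpow w q + q * rpow w (q-1) * (x - w) <= rpow x q.
Proof.
  intros Hq Hx Hw. destruct (Req_dec w 0). subst. rewrite !rpow_0. rewrite Rmult_0_r, Rmult_0_l.
  pose proof (rpow_nonneg x q); lra.
  destruct (Req_dec x 0). subst. rewrite rpow_0.
  assert (Ew : rpow w q = w * rpow w (q-1)). { replace q with (1 + (q-1)) at 1 by ring.
  rewrite rpow_plus by lra. rewrite rpow_1; lra. }
  pose proof (rpow_nonneg w (q-1)). assert (0 <= w * rpow w (q-1)) by (apply Rmult_le_pos; lra).
  rewrite Ew.
  replace (w * rpow w (q - 1) + q * rpow w (q - 1) * (0 - w)) with ((1-q) * (w * rpow w (q-1))) by ring.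
  assert (0 <= (q-1) * (w * rpow w (q-1))) by (apply Rmult_le_pos; lra). lra.
  pose proof (bernoulli (x/w) q) as B. assert (0 < x/w) by (apply Rdiv_lt_0_compat; lra).
  specialize (B H1 (or_introl Hq)).
  assert (E: rpow x q = rpow w q * rpow (x/w) q). { rewrite <- rpow_mul by lra. f_equal. field. lra.
  }
  assert (E2: rpow w q = w * rpow w (q-1)). { replace q with (1 + (q-1)) at 1 by ring.
  rewrite rpow_plus by lra. rewrite rpow_1; lra. }
  rewrite E. assert (0 < rpow w q) by (apply rpow_pos'; lra).
  apply Rle_trans with (rpow w q * (1 + q * (x/w - 1))). 2: apply Rmult_le_compat_l; lra.
  rewrite E2. right. field. lra.
Qed.

Lemma rpow_convex q lam x y : 1 <= q -> 0 <= lam <= 1 -> 0 <= x -> 0 <= y ->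
  rpow (lam*x + (1-lam)*y) q <= lam * rpow x q + (1-lam) * rpow y q.
Proof.
  intros Hq Hl Hx Hy. set (z := lam*x + (1-lam)*y).
  assert (Hz : 0 <= z) by (unfold z; nra).
  pose proof (tangent q x z Hq Hx Hz). pose proof (tangent q y z Hq Hy Hz).
  set (R0 := rpow z (q-1)) in *.
  assert (lam * (rpow z q + q * R0 * (x - z)) + (1-lam) * (rpow z q + q * R0 * (y - z)) = rpow z q).
  { unfold z. ring. }
  assert (lam * (rpow z q + q * R0 * (x - z)) <= lam * rpow x q) by (apply Rmult_le_compat_l; lra).
  assert ((1-lam) * (rpow z q + q * R0 * (y - z)) <= (1-lam) * rpow y q) by (apply Rmult_le_compat_l; lra).
  lra.
Qed.

Lemma rpow_le_self lam q : 1 <= q -> 0 <= lam <= 1 -> rpow lam q <= lam.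
Proof.
  intros. destruct (Req_dec lam 0). subst. rewrite rpow_0; lra.
  replace q with (1 + (q-1)) by ring. rewrite rpow_plus by lra. rewrite rpow_1 by lra.
  assert (rpow lam (q-1) <= rpow 1 (q-1)) by (apply rpow_mono; lra). rewrite rpow_one in H2.
  pose proof (rpow_nonneg lam (q-1)). nra.
Qed.

Lemma rpow_superadd q x y : 1 <= q -> 0 <= x -> 0 <= y -> rpow x q + rpow y q <= rpow (x+y) q.
Proof.
  intros. destruct (Req_dec (x+y) 0). assert (x = 0) by lra. assert (y=0) by lra. subst.
  rewrite Rplus_0_r, rpow_0. lra.
  assert (Ex: rpow x q = rpow (x/(x+y)) q * rpow (x+y) q). { rewrite <- rpow_mul. f_equal. field.
  auto.
   apply Rmult_le_pos; auto. left; apply Rinv_0_lt_compat; lra. lra. }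
  assert (Ey: rpow y q = rpow (y/(x+y)) q * rpow (x+y) q). { rewrite <- rpow_mul. f_equal. field.
  auto.
   apply Rmult_le_pos; auto. left; apply Rinv_0_lt_compat; lra. lra. }
  assert (0 <= x/(x+y) <= 1). { split. apply Rmult_le_pos; auto. left; apply Rinv_0_lt_compat; lra.
    apply Rmult_le_reg_r with (x+y). lra. field_simplify; lra. }
  assert (0 <= y/(x+y) <= 1). { split. apply Rmult_le_pos; auto. left; apply Rinv_0_lt_compat; lra.
    apply Rmult_le_reg_r with (x+y). lra. field_simplify; lra. }
  pose proof (rpow_le_self _ q H H3). pose proof (rpow_le_self _ q H H4).
  pose proof (rpow_nonneg (x+y) q).
  assert (x/(x+y) + y/(x+y) = 1) by (field; lra).
  rewrite Ex, Ey. nra.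
Qed.

Lemma rpow_lip q x y M : 1 <= q -> 0 <= x <= M -> 0 <= y <= M ->
  Rabs (rpow x q - rpow y q) <= q * rpow M (q-1) * Rabs (x - y).
Proof.
  intros Hq Hx Hy.
  pose proof (tangent q y x Hq ltac:(lra) ltac:(lra)).
  pose proof (tangent q x y Hq ltac:(lra) ltac:(lra)).
  assert (rpow x (q-1) <= rpow M (q-1)) by (apply rpow_mono; lra).
  assert (rpow y (q-1) <= rpow M (q-1)) by (apply rpow_mono; lra).
  pose proof (rpow_nonneg x (q-1)). pose proof (rpow_nonneg y (q-1)).
  set (Rx := rpow x (q-1)) in *. set (Ry := rpow y (q-1)) in *. set (RM := rpow M (q-1)) in *.
  destruct (Rle_dec y x).
  - assert (q*Rx*(x-y) <= q*RM*(x-y)). { apply Rmult_le_compat_r. lra. apply Rmult_le_compat_l; lra.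
    }
    assert (0 <= q*Ry*(x-y)). { apply Rmult_le_pos; [apply Rmult_le_pos|]; lra. }
    rewrite (Rabs_right (x-y)) by lra. rewrite Rabs_right by lra. lra.
  - assert (q*Ry*(y-x) <= q*RM*(y-x)). { apply Rmult_le_compat_r. lra. apply Rmult_le_compat_l; lra.
    }
    assert (0 <= q*Rx*(y-x)). { apply Rmult_le_pos; [apply Rmult_le_pos|]; lra. }
    rewrite (Rabs_left1 (x-y)) by lra. rewrite Rabs_left1 by lra. lra.
Qed.

Lemma exp_tangent al x y : 0 <= al -> x <= y -> exp (al * x) * (1 + al * (y - x)) <= exp (al * y).
Proof.
  intros. replace (al * y) with (al * x + al * (y - x)) by ring. rewrite exp_plus.
  apply Rmult_le_compat_l. left; apply exp_pos. apply exp_ineq1_le.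
Qed.

Lemma amgm x y c : 0 <= x -> 0 <= y -> x + y <= c -> x * y <= c^2/4.
Proof.
  intros. pose proof (pow2_ge_0 (x - y)). assert ((x+y)^2 <= c^2). { apply pow_incr; lra. } nra.
Qed.

Lemma le_eps x y : (forall eps, 0 < eps -> x <= y + eps) -> x <= y.
Proof.
  intros. destruct (Rle_dec x y); auto. specialize (H ((x-y)/2) ltac:(lra)). lra.
Qed.

Definition lsum (l : list R) : R := fold_right Rplus 0 l.

Lemma lsum_nonneg {T} (L : list T) (f : T -> R) : (forall i, 0 <= f i) -> 0 <= lsum (map f L).
Proof.
  intros. induction L; simpl. lra. specialize (H a). lra.
Qed.

Lemma lsum_le {T} (L : list T) (f g : T -> R) : (forall i, In i L -> f i <= g i) ->
  lsum (map f L) <= lsum (map g L).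
Proof.
  intros. induction L; simpl. lra. apply Rplus_le_compat. apply H; simpl; auto. apply IHL.
  intros; apply H; simpl; auto.
Qed.

Lemma lsum_scal {T} (L : list T) (f : T ->
  R) c : lsum (map (fun i => c * f i) L) = c * lsum (map f L).
Proof.
  induction L; simpl. ring. rewrite IHL. ring.
Qed.

Lemma lsum_plus {T} (L : list T) (f g : T ->
  R) : lsum (map (fun i => f i + g i) L) = lsum (map f L) + lsum (map g L).
Proof.
  induction L; simpl. ring. rewrite IHL. ring.
Qed.

Lemma lsum_zero {T} (L : list T) (f : T -> R) : (forall i, 0 <= f i) -> lsum (map f L) <= 0 ->
  forall i, In i L -> f i = 0.
Proof.
  intros. induction L; simpl in *. contradiction.
  pose proof (lsum_nonneg L f H). pose proof (H a). destruct H1. subst; lra. apply IHL; auto. lra.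
Qed.

Lemma lsum_superadd {T} q (L : list T) (f : T -> R) : 1 <= q -> (forall i, In i L -> 0 <= f i) ->
  lsum (map (fun i => rpow (f i) q) L) <= rpow (lsum (map f L)) q.
Proof.
  intros Hq Hf. induction L as [|i L IH]; simpl. { rewrite rpow_0; lra. }
  assert (Hnn : 0 <= lsum (map f L))
    by (apply Rle_trans with (lsum (map (fun _ => 0) L));
        [clear; induction L; simpl; lra | apply lsum_le; intros; apply Hf; simpl; auto]).
  eapply Rle_trans. 2: apply rpow_superadd; auto.
  pose proof (IH ltac:(intros; apply Hf; simpl; auto)). lra. apply Hf; simpl; auto.
Qed.

Lemma minkowski {T} q (L : list T) (al be : T -> R) U V : 1 <= q ->
  (forall i, In i L -> 0 <= al i) -> (forall i, In i L -> 0 <= be i) -> 0 <= U -> 0 <= V ->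
  lsum (map (fun i => rpow (al i) q) L) <= rpow U q ->
  lsum (map (fun i => rpow (be i) q) L) <= rpow V q ->
  lsum (map (fun i => rpow (al i + be i) q) L) <= rpow (U+V) q.
Proof.
  intros Hq Ha Hb HU HV H1 H2.
  destruct (Req_dec U 0). { subst. rewrite rpow_0 in H1.
    assert (forall i, In i L -> al i = 0). { intros. apply rpow_zero_inv with q; auto.
      rewrite <- (lsum_zero L (fun i => rpow (al i) q) (fun i => rpow_nonneg _ _) H1 i H). lra. }
    rewrite Rplus_0_l. eapply Rle_trans. 2: apply H2. apply lsum_le. intros. rewrite H; auto.
    rewrite Rplus_0_l; lra. }
  destruct (Req_dec V 0). { subst. rewrite rpow_0 in H2.
    assert (forall i, In i L -> be i = 0). { intros. apply rpow_zero_inv with q; auto.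
      rewrite <- (lsum_zero L (fun i => rpow (be i) q) (fun i => rpow_nonneg _ _) H2 i H0). lra. }
    rewrite Rplus_0_r. eapply Rle_trans. 2: apply H1. apply lsum_le. intros. rewrite H0; auto.
    rewrite Rplus_0_r; lra. }
  set (lam := U/(U+V)).
  assert (Hl : 0 <= lam <= 1). { unfold lam. split.
  apply Rmult_le_pos; [lra|left; apply Rinv_0_lt_compat; lra].
    apply Rmult_le_reg_r with (U+V). lra. field_simplify; lra. }
  assert (HU' : 0 < rpow U q) by (apply rpow_pos'; lra).
  assert (HV' : 0 < rpow V q) by (apply rpow_pos'; lra).
  assert (Hpt : forall i, In i L -> rpow (al i + be i) q <= rpow (U+V) q * (lam * (rpow (al i) q / rpow U q) + (1-lam) * (rpow (be i) q / rpow V q))).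
  { intros i Hi. specialize (Ha i Hi). specialize (Hb i Hi).
    replace (al i + be i) with ((U+V) * (lam * (al i / U) + (1-lam) * (be i / V))) by (unfold lam; field; lra).
    rewrite rpow_mul by (try lra; apply Rplus_le_le_0_compat; apply Rmult_le_pos; try lra; apply Rmult_le_pos; auto; left; apply Rinv_0_lt_compat; lra).
    apply Rmult_le_compat_l. apply rpow_nonneg.
    rewrite <- !rpow_div by (auto; lra).
    apply rpow_convex; auto; apply Rmult_le_pos; auto; left; apply Rinv_0_lt_compat; lra. }
  eapply Rle_trans. apply lsum_le. intros; apply Hpt; auto.
  rewrite lsum_scal, lsum_plus, !lsum_scal.
  unfold Rdiv.
  replace (lsum (map (fun i => rpow (al i) q * / rpow U q) L)) with (/ rpow U q * lsum (map (fun i => rpow (al i) q) L))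
   by (rewrite <- lsum_scal; f_equal; apply map_ext; intros; ring).
  replace (lsum (map (fun i => rpow (be i) q * / rpow V q) L)) with (/ rpow V q * lsum (map (fun i => rpow (be i) q) L))
   by (rewrite <- lsum_scal; f_equal; apply map_ext; intros; ring).
  assert (/ rpow U q * lsum (map (fun i => rpow (al i) q) L) <= 1).
  { apply Rmult_le_reg_l with (rpow U q). lra. field_simplify; lra. }
  assert (/ rpow V q * lsum (map (fun i => rpow (be i) q) L) <= 1).
  { apply Rmult_le_reg_l with (rpow V q). lra. field_simplify; lra. }
  pose proof (rpow_nonneg (U+V) q).
  assert (lam * (/ rpow U q * lsum (map (fun i => rpow (al i) q) L)) + (1-lam) * (/ rpow V q * lsum (map (fun i => rpow (be i) q) L)) <= 1) by nra.
  nra.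
Qed.

Lemma Rsup_spec E : bound E -> (exists x, E x) -> is_lub E (Rsup E).
Proof.
  intros. unfold Rsup. destruct excluded_middle_informative as [h|h].
  destruct (completeness E (proj1 h) (proj2 h)); simpl; auto. exfalso; tauto.
Qed.

Lemma Rsup_ub E x : bound E -> E x -> x <= Rsup E.
Proof.
  intros. destruct (Rsup_spec E H (ex_intro _ x H0)). apply H1; auto.
Qed.

Lemma Rsup_le E M : (exists x, E x) -> (forall x, E x -> x <= M) -> Rsup E <= M.
Proof.
  intros. assert (bound E) by (exists M; intros z Hz; auto).
  destruct (Rsup_spec E H1 H). apply H3. intros z Hz; auto.
Qed.

Lemma Rsup_approx E eps : bound E -> (exists x, E x) -> 0 < eps ->
  exists x, E x /\ Rsup E - eps < x.
Proof.
  intros. destruct (Rsup_spec E H H0).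
  apply NNPP. intro C. assert (Rsup E <= Rsup E - eps). apply H3. intros z Hz.
  destruct (Rle_dec z (Rsup E - eps)); auto. exfalso; apply C. exists z; split; auto; lra. lra.
Qed.

Lemma sumR_ext n f g : (forall i, (i < n)%nat -> f i = g i) -> sumR n f = sumR n g.
Proof.
  induction n; simpl; intros; auto. rewrite IHn by (intros; apply H; lia). rewrite H by lia. auto.
Qed.

Lemma sumR_plus n f g : sumR n (fun i => f i + g i) = sumR n f + sumR n g.
Proof.
  induction n; simpl. ring. rewrite IHn. ring.
Qed.

Lemma sumR_minus n f g : sumR n (fun i => f i - g i) = sumR n f - sumR n g.
Proof.
  induction n; simpl. ring. rewrite IHn. ring.
Qed.

Lemma sumR_scal n f c : sumR n (fun i => c * f i) = c * sumR n f.
Proof.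
  induction n; simpl. ring. rewrite IHn. ring.
Qed.

Lemma sumR_nonneg n f : (forall i, (i < n)%nat -> 0 <= f i) -> 0 <= sumR n f.
Proof.
  induction n; simpl; intros. lra. apply Rplus_le_le_0_compat. apply IHn; intros; apply H; lia.
  apply H; lia.
Qed.

Lemma sumR_le n f g : (forall i, (i < n)%nat -> f i <= g i) -> sumR n f <= sumR n g.
Proof.
  induction n; simpl; intros. lra. apply Rplus_le_compat. apply IHn; intros; apply H; lia.
  apply H; lia.
Qed.

Lemma cauchy_schwarz n a b : (sumR n (fun i => a i * b i))^2 <= sumR n (fun i => a i ^ 2) * sumR n (fun i => b i ^ 2).
Proof.
  induction n. simpl; lra. cbn [sumR].
  set (S := sumR n (fun i => a i * b i)) in *. set (A := sumR n (fun i => a i ^ 2)) in *.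
  set (B := sumR n (fun i => b i ^ 2)) in *.
  assert (HA : 0 <= A) by (apply sumR_nonneg; intros; nra).
  assert (HB : 0 <= B) by (apply sumR_nonneg; intros; nra).
  assert (Hab : Rabs S <= sqrt A * sqrt B).
  { rewrite <- sqrt_mult by auto. rewrite <- sqrt_Rsqr_abs. apply sqrt_le_1_alt. unfold Rsqr. lra. }
  assert (2 * (sqrt A * Rabs (b n)) * (sqrt B * Rabs (a n)) <= (sqrt A * Rabs (b n))^2 + (sqrt B * Rabs (a n))^2) by (pose proof (pow2_ge_0 (sqrt A * Rabs (b n) - sqrt B * Rabs (a n))); nra).
  assert ((sqrt A * Rabs (b n))^2 = A * b n ^2). { rewrite Rpow_mult_distr.
  rewrite pow2_sqrt by auto. rewrite pow2_abs. auto. }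
  assert ((sqrt B * Rabs (a n))^2 = B * a n ^2). { rewrite Rpow_mult_distr.
  rewrite pow2_sqrt by auto. rewrite pow2_abs. auto. }
  assert (S * (a n * b n) <= Rabs S * (Rabs (a n) * Rabs (b n))). { rewrite <- Rabs_mult.
  rewrite <- Rabs_mult. apply Rle_abs. }
  assert (Rabs S * (Rabs (a n) * Rabs (b n)) <= sqrt A * sqrt B * (Rabs (a n) * Rabs (b n))).
  { apply Rmult_le_compat_r. apply Rmult_le_pos; apply Rabs_pos. auto. }
  assert (E1 : 2 * (sqrt A * Rabs (b n)) * (sqrt B * Rabs (a n)) = 2 * (sqrt A * sqrt B * (Rabs (a n) * Rabs (b n)))) by ring.
  replace ((S + a n * b n)^2) with (S^2 + 2 * (S * (a n * b n)) + a n^2 * b n^2) by ring.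
  replace ((A + a n ^ 2) * (B + b n ^ 2)) with (A * B + A * b n ^2 + B * a n ^2 + a n^2 * b n^2) by ring.
  lra.
Qed.

(** Comparison with an integral: [(k+1)^(-th) <= (k^(1-th) - (k+1)^(1-th)) / (th - 1)]. *)
Lemma zeta_step th k : 1 < th -> (1 <= k)%nat ->
  rpow (INR (S k)) (-th) <= (rpow (INR k) (1-th) - rpow (INR (S k)) (1-th)) / (th - 1).
Proof.
  intros Hth Hk. assert (Hk' : 1 <= INR k) by (apply (le_INR 1); auto).
  rewrite S_INR. set (K := INR k) in *.
  pose proof (bernoulli (K/(K+1)) (1-th) ltac:(apply Rdiv_lt_0_compat; lra) ltac:(right; lra)) as B.
  rewrite rpow_div in B by lra.
  assert (HK1 : 0 < rpow (K+1) (1-th)) by (apply rpow_pos'; lra).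
  assert (E : rpow (K+1) (-th) = rpow (K+1) (1-th) / (K+1)).
  { replace (1-th) with (1 + -th) by ring. rewrite rpow_plus by lra. rewrite rpow_1 by lra. field.
    lra. }
  rewrite E. apply Rmult_le_reg_r with ((th-1)*(K+1)). nra.
  apply Rmult_le_compat_r with (r := rpow (K+1) (1-th)) in B; [|lra].
  replace (rpow K (1 - th) / rpow (K + 1) (1 - th) * rpow (K + 1) (1 - th)) with (rpow K (1-th)) in B by (field; lra).
  replace ((1 + (1 - th) * (K / (K + 1) - 1)) * rpow (K + 1) (1 - th)) with (rpow (K+1) (1-th) + (th-1) * (rpow (K+1) (1-th) / (K+1))) in B by (field; lra).
  replace (rpow (K + 1) (1 - th) / (K + 1) * ((th - 1) * (K + 1))) with ((th-1) * rpow (K+1) (1-th)) by (field; lra).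
  replace ((rpow K (1 - th) - rpow (K + 1) (1 - th)) / (th - 1) * ((th - 1) * (K + 1))) with ((rpow K (1 - th) - rpow (K + 1) (1 - th))*(K+1)) by (field; lra).
  assert ((th-1) * (rpow (K+1) (1-th) / (K+1)) <= rpow K (1-th) - rpow (K+1) (1-th)) by lra.
  replace ((th-1) * rpow (K+1) (1-th)) with ((th-1) * (rpow (K+1) (1-th) / (K+1)) * (K+1)) by (field; lra).
  apply Rmult_le_compat_r; lra.
Qed.

Definition zeta_sum (th : R) (N : nat) : R := sumR N (fun k => rpow (INR (S k)) (-th)).

Lemma zeta_sum_nonneg th N : 0 <= zeta_sum th N.
Proof.
  unfold zeta_sum. apply sumR_nonneg. intros; apply rpow_nonneg.
Qed.

Lemma zeta_sum_bound th N : 1 < th -> zeta_sum th N <= 1 + 1/(th-1).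
Proof.
  intros Hth.
  assert (forall N, (1 <= N)%nat -> zeta_sum th N <= 1 + (1 - rpow (INR N) (1-th))/(th-1)).
  { induction N0; intros. lia. destruct N0.
    - unfold zeta_sum; simpl. rewrite Rplus_0_l.
      replace (1 - rpow 1 (1-th)) with 0 by (rewrite rpow_one; ring).
      rewrite rpow_one. unfold Rdiv; lra.
    - unfold zeta_sum in *. simpl sumR. specialize (IHN0 ltac:(lia)).
      pose proof (zeta_step th (S N0) Hth ltac:(lia)).
      change (sumR (S N0) (fun k => rpow (INR (S k)) (- th)) + rpow (INR (S (S N0))) (- th) <= 1 + (1 - rpow (INR (S (S N0))) (1 - th)) / (th - 1)).
      unfold Rdiv in *. lra. }
  destruct N. unfold zeta_sum; simpl. assert (0 < 1/(th-1)) by (apply Rdiv_lt_0_compat; lra). lra.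
  eapply Rle_trans. apply H; lia. pose proof (rpow_nonneg (INR (S N)) (1-th)).
  assert (0 < /(th-1)) by (apply Rinv_0_lt_compat; lra). unfold Rdiv. nra.
Qed.

Lemma Kp_bound p : 1 < p < 2 -> 0 < Kp p /\ 1/(2/p - 1) <= Kp p.
Proof.
  intros Hp. unfold Kp. set (th := 2/p).
  assert (Hth : 1 < th). { unfold th. apply Rmult_lt_reg_r with p. lra. field_simplify; lra. }
  assert (Hl2 : ln 2 < 1). { rewrite <- ln_exp with 1. apply ln_increasing. lra.
  pose proof (exp_ineq1 1). lra. }
  assert (Hl2' : 0 < ln 2). { rewrite <- ln_1. apply ln_increasing; lra. }
  assert (E: Rpower 2 (1 - th) = exp ((1-th) * ln 2)) by reflexivity.
  pose proof (exp_ineq1_le ((1-th)*ln 2)).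
  assert (0 < (th-1)*ln 2) by (apply Rmult_lt_0_compat; lra).
  assert (exp ((1-th)*ln 2) < 1).
  { assert (Hn : (1-th)*ln 2 < 0) by (replace ((1-th)*ln 2) with (-((th-1)*ln 2)) by ring; lra).
  pose proof (exp_increasing _ _ Hn). rewrite exp_0 in *. lra. }
  assert (0 < 1 - Rpower 2 (1-th)) by lra.
  assert (0 <= (th-1)*(1-ln 2)) by (apply Rmult_le_pos; lra).
  assert (1 - Rpower 2 (1-th) <= th - 1) by (rewrite E; lra).
  split. apply Rinv_0_lt_compat; auto.
  unfold Rdiv. rewrite Rmult_1_l. apply Rinv_le_contravar; lra.
Qed.

(** The Young-Loeve constant: sum_k k^(-2/p) <= K + 1. *)
Lemma zeta_sum_K p N : 1 < p < 2 -> zeta_sum (2/p) N <= Kp p + 1.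
Proof.
  intros Hp. destruct (Kp_bound p Hp).
  assert (1 < 2/p) by (apply Rmult_lt_reg_r with p; [lra | field_simplify; lra]).
  pose proof (zeta_sum_bound (2/p) N H1). lra.
Qed.

Lemma vnorm_nonneg n v : 0 <= vnorm n v.
Proof.
  apply sqrt_pos.
Qed.

Lemma vnorm_ext n u v : (forall i, (i < n)%nat -> u i = v i) -> vnorm n u = vnorm n v.
Proof.
  intros. unfold vnorm. f_equal. apply sumR_ext. intros. rewrite H; auto.
Qed.

Lemma vnorm_sq n v : vnorm n v ^ 2 = sumR n (fun i => v i ^ 2).
Proof.
  unfold vnorm. rewrite pow2_sqrt; auto. apply sumR_nonneg; intros; nra.
Qed.

Lemma vnorm_triangle n u v : vnorm n (vadd u v) <= vnorm n u + vnorm n v.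
Proof.
  pose proof (vnorm_nonneg n u). pose proof (vnorm_nonneg n v).
  apply Rsqr_incr_0_var. 2: lra. unfold Rsqr.
  replace (vnorm n (vadd u v) * vnorm n (vadd u v)) with (vnorm n (vadd u v) ^2) by ring.
  rewrite vnorm_sq. unfold vadd.
  replace (sumR n (fun i => (u i + v i) ^ 2)) with (sumR n (fun i => u i ^2) + sumR n (fun i => v i ^ 2) + 2 * sumR n (fun i => u i * v i)).
  2: { rewrite <- sumR_scal, <- !sumR_plus. apply sumR_ext; intros; ring. }
  rewrite <- !vnorm_sq.
  pose proof (cauchy_schwarz n u v). rewrite <- !vnorm_sq in H1.
  assert (sumR n (fun i => u i * v i) <= vnorm n u * vnorm n v).
  { apply Rsqr_incr_0_var. 2: nra. unfold Rsqr.
    destruct (Rle_dec 0 (sumR n (fun i => u i * v i))). nra. nra. }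
  nra.
Qed.

Lemma vnorm_scal n v c : vnorm n (fun i => c * v i) = Rabs c * vnorm n v.
Proof.
  unfold vnorm. rewrite <- (sqrt_Rsqr (Rabs c)) by apply Rabs_pos. rewrite <- sqrt_mult.
  f_equal. rewrite <- sumR_scal. apply sumR_ext; intros. rewrite <- Rsqr_abs. unfold Rsqr. ring.
  apply Rle_0_sqr. apply sumR_nonneg; intros; nra.
Qed.

Lemma vnorm_vsub_sym n u v : vnorm n (vsub u v) = vnorm n (vsub v u).
Proof.
  replace (vsub u v) with (fun i => (-1) * vsub v u i). rewrite vnorm_scal.
  replace (Rabs (-1)) with 1 by (rewrite Rabs_left; lra). ring.
  apply functional_extensionality; intros; unfold vsub; ring.
Qed.

Lemma vnorm_vzero n : vnorm n vzero = 0.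
Proof.
  unfold vnorm, vzero. replace (sumR n (fun _ => 0 ^ 2)) with 0. apply sqrt_0.
  induction n. auto. cbn [sumR]. rewrite <- IHn. ring.
Qed.

Lemma vsub_self_norm r v : vnorm r (vsub v v) = 0.
Proof.
  replace (vsub v v) with vzero. apply vnorm_vzero.
  apply functional_extensionality; intros; unfold vsub, vzero; ring.
Qed.

Lemma vnorm_sub_triangle n u v w : vnorm n (vsub u w) <= vnorm n (vsub u v) + vnorm n (vsub v w).
Proof.
  replace (vsub u w) with (vadd (vsub u v) (vsub v w)). apply vnorm_triangle.
  apply functional_extensionality; intros; unfold vadd, vsub; ring.
Qed.

Lemma vnorm_add_le n u v : vnorm n u <= vnorm n v + vnorm n (vsub u v).
Proof.
  replace u with (vadd v (vsub u v)) at 1. apply vnorm_triangle.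
  apply functional_extensionality; intros; unfold vadd, vsub; ring.
Qed.

Lemma vnorm_vsub_le n u v : vnorm n (vsub u v) <= vnorm n u + vnorm n v.
Proof.
  replace (vsub u v) with (vadd u (fun i => (-1) * v i)). eapply Rle_trans. apply vnorm_triangle.
  rewrite vnorm_scal. replace (Rabs (-1)) with 1 by (rewrite Rabs_left; lra). lra.
  apply functional_extensionality; intros; unfold vadd, vsub; ring.
Qed.

Lemma vnorm_rev r u v : Rabs (vnorm r u - vnorm r v) <= vnorm r (vsub u v).
Proof.
  pose proof (vnorm_add_le r u v). pose proof (vnorm_add_le r v u). rewrite vnorm_vsub_sym in H0.
  unfold Rabs; destruct Rcase_abs; lra.
Qed.

(** The Frobenius norm, an a priori bound for the operator norm. *)
Definition fro (r c : nat) (M : mat) : R := sqrt (sumR r (fun i => sumR c (fun j => M i j ^ 2))).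

Lemma mvmul_bound r c M v : vnorm r (mvmul c M v) <= fro r c M * vnorm c v.
Proof.
  unfold fro. rewrite <- (sqrt_pow2 (vnorm c v)) by apply vnorm_nonneg. rewrite <- sqrt_mult.
  2: apply sumR_nonneg; intros; apply sumR_nonneg; intros; nra. 2: nra.
  unfold vnorm at 1. apply sqrt_le_1_alt. rewrite vnorm_sq. rewrite Rmult_comm, <- sumR_scal.
  apply sumR_le. intros.
  unfold mvmul. rewrite Rmult_comm. apply cauchy_schwarz.
Qed.

Lemma opnorm_set_bound r c M : bound (fun s => exists v, vnorm c v <= 1 /\ s = vnorm r (mvmul c M v)).
Proof.
  exists (fro r c M). intros s [v [H1 H2]]. subst. eapply Rle_trans. apply mvmul_bound.
  assert (0 <= fro r c M) by apply sqrt_pos. pose proof (vnorm_nonneg c v). nra.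
Qed.

Lemma opnorm_nonneg r c M : 0 <= opnorm r c M.
Proof.
  unfold opnorm. eapply Rle_trans. 2: apply Rsup_ub. 2: apply opnorm_set_bound.
  2: exists vzero; split; [rewrite vnorm_vzero; lra| reflexivity]. apply vnorm_nonneg.
Qed.

Lemma opnorm_spec r c M v : vnorm r (mvmul c M v) <= opnorm r c M * vnorm c v.
Proof.
  destruct (Req_dec (vnorm c v) 0).
  - rewrite H, Rmult_0_r. pose proof (mvmul_bound r c M v). rewrite H, Rmult_0_r in H0.
    pose proof (vnorm_nonneg r (mvmul c M v)). lra.
  - assert (Hp : 0 < vnorm c v) by (pose proof (vnorm_nonneg c v); lra).
    set (w := fun j => / vnorm c v * v j).
    assert (Hw : vnorm c w = 1). { unfold w. rewrite vnorm_scal. rewrite Rabs_right. field. lra.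
    left; apply Rinv_0_lt_compat; lra. }
    assert (Hmw : mvmul c M w = fun i => / vnorm c v * mvmul c M v i).
    { apply functional_extensionality; intros. unfold mvmul, w. rewrite <- sumR_scal.
      apply sumR_ext; intros; ring. }
    assert (vnorm r (mvmul c M w) <= opnorm r c M). { unfold opnorm. apply Rsup_ub.
    apply opnorm_set_bound. exists w. split; auto; lra. }
    rewrite Hmw, vnorm_scal, Rabs_right in H0 by (left; apply Rinv_0_lt_compat; lra).
    apply Rmult_le_reg_l with (/ vnorm c v). apply Rinv_0_lt_compat; lra.
    replace (/ vnorm c v * (opnorm r c M * vnorm c v)) with (opnorm r c M) by (field; lra). lra.
Qed.

(** Algebraic identity behind point removal in a Riemann-Stieltjes sum:
    [G0 (x_m - x_p) + G1 (x_n - x_m) - G0 (x_n - x_p) = (G1 - G0)(x_n - x_m)]. *)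
Lemma vsub_mvmul_gap m (G0 G1 : mat) (xp xm xn : vec) :
  vsub (vadd (mvmul m G0 (vsub xm xp)) (mvmul m G1 (vsub xn xm))) (mvmul m G0 (vsub xn xp)) = mvmul m (msub G1 G0) (vsub xn xm).
Proof.
  apply functional_extensionality; intros i. unfold vsub, vadd, mvmul, msub.
  rewrite <- sumR_plus, <- sumR_minus. apply sumR_ext; intros; ring.
Qed.

Lemma last_indep {T} (l : list T) : forall a y1 y2, last (a::l) y1 = last (a::l) y2.
Proof.
  induction l; intros; auto. change (last (a :: l) y1 = last (a::l) y2). auto.
Qed.

Lemma last_cons {T} (x0 x : T) l : last (x :: l) x0 = last l x.
Proof.
  destruct l; auto. change (last (t::l) x0 = last (t::l) x). apply last_indep.
Qed.

Lemma last_app {T} (l1 l2 : list T) t0 : last (l1 ++ l2) t0 = last l2 (last l1 t0).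
Proof.
  revert t0; induction l1; intros; auto. rewrite <- app_comm_cons, !last_cons. apply IHl1.
Qed.

Lemma chain_app t0 l1 l2 : chain_lt t0 l1 -> chain_lt (last l1 t0) l2 -> chain_lt t0 (l1 ++ l2).
Proof.
  revert t0; induction l1; simpl; intros; auto. destruct H; split; auto.
  apply IHl1; auto. destruct l1; auto. rewrite !last_cons in *; auto.
Qed.

Lemma chain_app_inv t0 l1 l2 : chain_lt t0 (l1 ++ l2) -> chain_lt t0 l1 /\ chain_lt (last l1 t0) l2.
Proof.
  revert t0; induction l1; intros t0 H. simpl in *; auto.
  rewrite <- app_comm_cons in H. destruct H. destruct (IHl1 _ H0). rewrite last_cons. simpl; auto.
Qed.

Lemma chain_last t0 l : chain_lt t0 l -> l <> nil -> t0 < last l t0.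
Proof.
  revert t0; induction l; intros t0 H Hn. congruence. destruct H. rewrite last_cons. destruct l.
  simpl; auto.
  eapply Rlt_trans; [eauto|]. apply IHl; auto; congruence.
Qed.

Lemma chain_le_last t0 l : chain_lt t0 l -> t0 <= last l t0.
Proof.
  intros. destruct l. simpl; lra. left; apply chain_last; auto; congruence.
Qed.

Lemma part_app s u t l1 l2 : is_partition s u l1 -> is_partition u t l2 ->
  is_partition s t (l1 ++ l2).
Proof.
  intros [H1 H2] [H3 H4]. split. apply chain_app; auto. rewrite H2; auto.
  rewrite last_app, H2; auto.
Qed.

Lemma part_nil s l : is_partition s s l -> l = nil.
Proof.
  intros [H1 H2]. destruct l; auto. pose proof (chain_last s (r::l) H1 ltac:(congruence)). lra.
Qed.

Lemma part_le s t l : is_partition s t l -> s <= t.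
Proof.
  intros [H1 H2]. rewrite <- H2. apply chain_le_last; auto.
Qed.

Lemma part_single s t : s < t -> is_partition s t (t :: nil).
Proof.
  intros. split; simpl; auto.
Qed.

Lemma part_cons s t1 t l : is_partition s t (t1 :: l) -> s < t1 /\ is_partition t1 t l.
Proof.
  intros [H1 H2]. simpl in H1. destruct H1. split; auto. split; auto. rewrite last_cons in H2; auto.
Qed.

Lemma part_cons' s t1 t l : s < t1 -> is_partition t1 t l -> is_partition s t (t1 :: l).
Proof.
  intros H [H1 H2]. split. simpl; auto. rewrite last_cons; auto.
Qed.

Lemma decomp_facts s t l1 mid nxt l2 : is_partition s t (l1 ++ mid :: nxt :: l2) ->
  s <= last l1 s /\ last l1 s < mid /\ mid < nxt /\ nxt <= t /\ is_partition s t (l1 ++ nxt :: l2).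
Proof.
  intros [Hc Hl]. destruct (chain_app_inv _ _ _ Hc) as [H1 H2]. simpl in H2.
  destruct H2 as [H2 [H3 H4]].
  rewrite last_app, !last_cons in Hl. pose proof (chain_le_last _ _ H4). rewrite Hl in H.
  pose proof (chain_le_last _ _ H1).
  repeat split; auto. apply chain_app; auto. simpl. split; auto. lra. rewrite last_app, last_cons.
  auto.
Qed.

Fixpoint pieces (t0 : R) (l : list R) : list (R*R) :=
  match l with nil => nil | t1 :: l' => (t0,t1) :: pieces t1 l' end.

Lemma pieces_in t0 l pr : chain_lt t0 l -> In pr (pieces t0 l) ->
  t0 <= fst pr /\ fst pr < snd pr /\ snd pr <= last l t0.
Proof.
  revert t0; induction l; intros t0 Hc Hi. { simpl in Hi; contradiction. }
  destruct Hc as [H1 H2]. pose proof (chain_le_last _ _ H2). rewrite last_cons.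
  cbn [pieces In] in Hi. destruct Hi as [<-|Hi]. { simpl. lra. }
  specialize (IHl a H2 Hi). lra.
Qed.

Lemma pieces_tele (Gm : R -> R) t0 l :
  lsum (map (fun pr => Gm (snd pr) - Gm (fst pr)) (pieces t0 l)) = Gm (last l t0) - Gm t0.
Proof.
  revert t0; induction l; intros. { simpl; ring. }
  rewrite last_cons. cbn [pieces map lsum fold_right]. unfold lsum in IHl. rewrite IHl. simpl. ring.
Qed.

Lemma psum_nonneg r p z t0 l : 0 <= psum r p z t0 l.
Proof.
  revert t0; induction l; simpl; intros. lra.
  pose proof (rpow_nonneg (vnorm r (vsub (z a) (z t0))) p). specialize (IHl a). lra.
Qed.

Lemma psum_app r p z t0 l1 l2 : psum r p z t0 (l1 ++ l2) = psum r p z t0 l1 + psum r p z (last l1 t0) l2.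
Proof.
  revert t0; induction l1; intros. simpl; ring. rewrite <- app_comm_cons, last_cons. simpl.
  rewrite IHl1. ring.
Qed.

Lemma psum_pieces r p z t0 l :
  psum r p z t0 l = lsum (map (fun pr => rpow (vnorm r (vsub (z (snd pr)) (z (fst pr)))) p) (pieces t0 l)).
Proof.
  revert t0; induction l; simpl; intros; auto. rewrite IHl. auto.
Qed.

Lemma psums_ne r p z s t : s <= t -> exists v, psums r p z s t v.
Proof.
  intros. destruct H. exists (psum r p z s (t::nil)). exists (t::nil); split; auto.
  apply part_single; auto.
  subst. exists 0. exists nil. split; auto. split; simpl; auto.
Qed.

Lemma psums_sub r p z a b s t : a <= s -> s <= t -> t <= b -> bound (psums r p z a b) ->
  bound (psums r p z s t).
Proof.
  intros Has Hst Htb [M HM]. exists M. intros v [l [Hl Hv]]. subst v.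
  set (l1 := if Rlt_dec a s then s :: nil else nil).
  set (l3 := if Rlt_dec t b then b :: nil else nil).
  assert (P1 : is_partition a s l1). { unfold l1; destruct (Rlt_dec a s). apply part_single; auto.
  assert (a = s) by lra. subst; split; simpl; auto. }
  assert (P3 : is_partition t b l3). { unfold l3; destruct (Rlt_dec t b). apply part_single; auto.
  assert (t = b) by lra. subst; split; simpl; auto. }
  assert (P : is_partition a b (l1 ++ l ++ l3)) by (eapply part_app; eauto; eapply part_app; eauto).
  specialize (HM _ (ex_intro _ _ (conj P eq_refl))).
  rewrite !psum_app in HM. destruct P1 as [_ E1]. rewrite E1 in HM. destruct Hl as [_ E2].
  rewrite E2 in HM.
  pose proof (psum_nonneg r p z a l1). pose proof (psum_nonneg r p z t l3). lra.
Qed.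

Definition pctrl r p (z : R -> vec) s t := Rsup (psums r p z s t).

Lemma pctrl_ub r p z s t l : bound (psums r p z s t) -> is_partition s t l ->
  psum r p z s l <= pctrl r p z s t.
Proof.
  intros. apply Rsup_ub; auto. exists l; auto.
Qed.

Lemma pctrl_nonneg r p z s t : s <= t -> bound (psums r p z s t) -> 0 <= pctrl r p z s t.
Proof.
  intros. destruct (psums_ne r p z s t H) as [v [l [Hl Hv]]]. eapply Rle_trans.
  2: eapply pctrl_ub; eauto. apply psum_nonneg.
Qed.

Lemma pctrl_nonneg_any r p z s t : 0 <= pctrl r p z s t.
Proof.
  unfold pctrl, Rsup. destruct excluded_middle_informative as [h|h]. 2: lra.
  destruct (completeness _ _ _) as [M [HM1 HM2]]. simpl. destruct h as [_ [v Hv]].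
  pose proof (HM1 v Hv). destruct Hv as [l [_ Hv]]. subst. pose proof (psum_nonneg r p z s l). lra.
Qed.

Lemma pctrl_self r p z s : pctrl r p z s s = 0.
Proof.
  unfold pctrl. apply Rle_antisym. apply Rsup_le. apply psums_ne; lra.
  intros v [l [Hl Hv]]. apply part_nil in Hl. subst. simpl; lra.
  apply Rsup_ub. exists 0. intros v [l [Hl Hv]]. apply part_nil in Hl. subst. simpl; lra.
  exists nil. split; auto. split; simpl; auto.
Qed.

Lemma pctrl_le r p z s t M : s <= t -> (forall l, is_partition s t l -> psum r p z s l <= M) ->
  pctrl r p z s t <= M.
Proof.
  intros. apply Rsup_le. apply psums_ne; auto. intros v [l [Hl Hv]]. subst; auto.
Qed.

Lemma pctrl_superadd r p z a b s u t : a <= s -> s <= u -> u <= t -> t <= b ->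
  bound (psums r p z a b) ->
  pctrl r p z s u + pctrl r p z u t <= pctrl r p z s t.
Proof.
  intros H H0 H1 H2 H3. apply le_eps. intros eps He.
  destruct (Rsup_approx (psums r p z s u) (eps/2)) as [v1 [[l1 [P1 E1]] H4]]; auto.
  apply (psums_sub r p z a b); auto; lra. apply psums_ne; auto. lra.
  destruct (Rsup_approx (psums r p z u t) (eps/2)) as [v2 [[l2 [P2 E2]] H5]]; auto.
  apply (psums_sub r p z a b); auto; lra. apply psums_ne; auto. lra.
  subst. assert (P := part_app _ _ _ _ _ P1 P2).
  pose proof (pctrl_ub r p z s t _ ltac:(apply (psums_sub r p z a b); auto; lra) P).
  rewrite psum_app in H6.
  destruct P1 as [_ E]. rewrite E in H6. unfold pctrl in *. lra.
Qed.

Lemma pctrl_mono_r r p z a b s t t' : a <= s -> s <= t -> t <= t' -> t' <= b ->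
  bound (psums r p z a b) -> pctrl r p z s t <= pctrl r p z s t'.
Proof.
  intros. pose proof (pctrl_superadd r p z a b s t t' H H0 H1 H2 H3).
  pose proof (pctrl_nonneg r p z t t' H1 ltac:(apply (psums_sub r p z a b); auto; lra)). lra.
Qed.

Lemma pctrl_sub r p z a b s u v t : a <= s -> s <= u -> u <= v -> v <= t -> t <= b ->
  bound (psums r p z a b) -> pctrl r p z u v <= pctrl r p z s t.
Proof.
  intros.
  pose proof (pctrl_superadd r p z a b s u t ltac:(lra) ltac:(lra) ltac:(lra) ltac:(lra) H4).
  pose proof (pctrl_superadd r p z a b u v t ltac:(lra) ltac:(lra) ltac:(lra) ltac:(lra) H4).
  pose proof (pctrl_nonneg_any r p z s u). pose proof (pctrl_nonneg_any r p z v t). lra.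
Qed.

Lemma pctrl_step r p z s t : s <= t -> bound (psums r p z s t) ->
  rpow (vnorm r (vsub (z t) (z s))) p <= pctrl r p z s t.
Proof.
  intros. destruct H. pose proof (pctrl_ub r p z s t _ H0 (part_single s t H)). simpl in H1. lra.
  subst. rewrite pctrl_self. replace (vsub (z t) (z t)) with vzero. rewrite vnorm_vzero, rpow_0.
  lra.
  apply functional_extensionality; intros; unfold vsub, vzero; ring.
Qed.

(** Splitting a p-sum at an interior point [u]: the piece straddling [u]
    contributes [(al + be)^p] with [al^p], [be^p] charged to the two sides. *)
Lemma split_psum r p z a b : 1 <= p -> bound (psums r p z a b) ->
  forall l t0 e u, a <= t0 -> e <= b -> is_partition t0 e l -> t0 <= u <= e ->
  exists A al B be r', 0 <= A /\ 0 <= al /\ 0 <= B /\ 0 <= be /\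
    A + rpow al p <= pctrl r p z t0 u /\ B + rpow be p <= pctrl r p z u e /\
    psum r p z t0 l <= A + rpow (al + be) p + B /\ u <= r' <= e /\ be = vnorm r (vsub (z r') (z u)).
Proof.
  intros Hp Hbd. induction l; intros t0 e u Ht0 He Hl Hu.
  - destruct Hl as [_ Hl]. simpl in Hl. subst e. assert (u = t0) by lra. subst u.
    exists 0, 0, 0, 0, t0. rewrite pctrl_self, vsub_self_norm, !Rplus_0_r, rpow_0. simpl.
    repeat split; lra.
  - destruct (part_cons _ _ _ _ Hl) as [H01 Hl'].
    pose proof (part_le _ _ _ Hl') as H1e.
    destruct (Rle_dec a0 u) as [Hau|Hau].
    + destruct (IHl a0 e u ltac:(lra) He Hl' ltac:(lra)) as [A [al [B [be [r' [HA [Hal [HB [Hbe [H1 [H2 [H3 [H4 H5]]]]]]]]]]]]].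
      exists (rpow (vnorm r (vsub (z a0) (z t0))) p + A), al, B, be, r'.
      pose proof (rpow_nonneg (vnorm r (vsub (z a0) (z t0))) p).
      pose proof (pctrl_step r p z t0 a0 ltac:(lra) ltac:(apply (psums_sub r p z a b); auto; lra)).
      pose proof (pctrl_superadd r p z a b t0 a0 u ltac:(lra) ltac:(lra) ltac:(lra) ltac:(lra) Hbd).
      repeat split; auto; try lra. simpl. lra.
    + exists 0, (vnorm r (vsub (z u) (z t0))), (psum r p z a0 l), (vnorm r (vsub (z a0) (z u))), a0.
      apply Rnot_le_lt in Hau.
      pose proof (pctrl_step r p z t0 u ltac:(lra) ltac:(apply (psums_sub r p z a b); auto; lra)).
      pose proof (pctrl_ub r p z u e (a0 :: l) ltac:(apply (psums_sub r p z a b); auto; lra) (part_cons' u a0 e l ltac:(lra) Hl')).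
      simpl in H0.
      assert (rpow (vnorm r (vsub (z a0) (z t0))) p <= rpow (vnorm r (vsub (z u) (z t0)) + vnorm r (vsub (z a0) (z u))) p).
      { apply rpow_mono. lra. split. apply vnorm_nonneg.
        pose proof (vnorm_sub_triangle r (z a0) (z u) (z t0)). lra. }
      repeat split; try lra; try apply vnorm_nonneg; try apply psum_nonneg. simpl. lra.
Qed.

Fixpoint pair_sum (G : R -> R -> R) (t0 : R) (l : list R) : R :=
  match l with nil => 0 | t1 :: l' => G t0 t1 + pair_sum G t1 l' end.

Lemma pair_sum_pieces G t0 l : pair_sum G t0 l = lsum (map (fun pr => G (fst pr) (snd pr)) (pieces t0 l)).
Proof.
  revert t0; induction l; simpl; intros; auto. rewrite IHl. auto.
Qed.

Lemma pair_sum_pctrl r p z a b : forall l s t, 1 <= p -> bound (psums r p z a b) -> a <= s ->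
  t <= b -> is_partition s t l ->
  pair_sum (pctrl r p z) s l <= pctrl r p z s t.
Proof.
  induction l; intros s t Hp Hbd Hs Ht Hl. destruct Hl as [_ Hl]; simpl in *. subst.
  rewrite pctrl_self. lra.
  destruct (part_cons _ _ _ _ Hl) as [H1 Hl']. pose proof (part_le _ _ _ Hl').
  simpl. specialize (IHl a0 t Hp Hbd ltac:(lra) Ht Hl').
  pose proof (pctrl_superadd r p z a b s a0 t ltac:(lra) ltac:(lra) ltac:(lra) ltac:(lra) Hbd). lra.
Qed.

Lemma pvar_pctrl r p z s t : pvar_semi r p z s t = rpow (pctrl r p z s t) (1/p).
Proof.
  reflexivity.
Qed.

Lemma pvar_nonneg r p z s t : 0 <= pvar_semi r p z s t.
Proof.
  apply rpow_nonneg.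
Qed.

Lemma pvar_pow r p z a b s t : 0 < p -> a <= s -> s <= t -> t <= b -> bound (psums r p z a b) ->
  rpow (pvar_semi r p z s t) p = pctrl r p z s t.
Proof.
  intros. rewrite pvar_pctrl. apply rpow_inv'; auto. apply pctrl_nonneg; auto.
  apply (psums_sub r p z a b); auto.
Qed.

Lemma pvar_self r p z s : pvar_semi r p z s s = 0.
Proof.
  rewrite pvar_pctrl, pctrl_self. apply rpow_0.
Qed.

Lemma pvar_le r p z s t Z : 0 < p -> s <= t -> 0 <= Z ->
  (forall l, is_partition s t l -> psum r p z s l <= rpow Z p) -> pvar_semi r p z s t <= Z.
Proof.
  intros. rewrite pvar_pctrl. rewrite <- (rpow_inv Z p) by auto. apply rpow_mono.
  left; apply Rdiv_lt_0_compat; lra. split. destruct (psums_ne r p z s t H0) as [v [l [Hl Hv]]].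
  apply Rle_trans with (psum r p z s l). apply psum_nonneg. apply Rsup_ub. exists (rpow Z p).
  intros w [l' [Hl' Hw]]. subst; auto. exists l; auto.
  apply pctrl_le; auto.
Qed.

Lemma pvar_step r p z a b s t : 0 < p -> a <= s -> s <= t -> t <= b -> bound (psums r p z a b) ->
  vnorm r (vsub (z t) (z s)) <= pvar_semi r p z s t.
Proof.
  intros. rewrite pvar_pctrl.
  rewrite <- (rpow_inv (vnorm r (vsub (z t) (z s))) p) by (auto; apply vnorm_nonneg).
  apply rpow_mono. left; apply Rdiv_lt_0_compat; lra. split. apply rpow_nonneg.
  apply pctrl_step; auto. apply (psums_sub r p z a b); auto.
Qed.

Lemma vnorm_le_pvar r p z a b s t : 0 < p -> a <= s -> s <= t -> t <= b ->
  bound (psums r p z a b) ->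
  vnorm r (z t) <= vnorm r (z s) + pvar_semi r p z s t.
Proof.
  intros. pose proof (vnorm_add_le r (z t) (z s)). pose proof (pvar_step r p z a b s t).
  rewrite (vnorm_vsub_sym r (z t) (z s)) in *. intuition lra.
Qed.

Lemma pvar_mono r p z a b s u t v : 0 < p -> a <= s -> s <= u -> u <= v -> v <= t -> t <= b ->
  bound (psums r p z a b) ->
  pvar_semi r p z u v <= pvar_semi r p z s t.
Proof.
  intros. rewrite !pvar_pctrl. apply rpow_mono. left; apply Rdiv_lt_0_compat; lra. split.
  apply pctrl_nonneg; auto. apply (psums_sub r p z a b); auto; lra.
  pose proof (pctrl_superadd r p z a b s u t ltac:(lra) ltac:(lra) ltac:(lra) ltac:(lra) H5).
  pose proof (pctrl_superadd r p z a b u v t ltac:(lra) ltac:(lra) ltac:(lra) ltac:(lra) H5).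
  pose proof (pctrl_nonneg r p z s u ltac:(lra) ltac:(apply (psums_sub r p z a b); auto; lra)).
  pose proof (pctrl_nonneg r p z v t ltac:(lra) ltac:(apply (psums_sub r p z a b); auto; lra)).
  lra.
Qed.

(** Subadditivity of the p-variation seminorm ([p >= 1]), from [split_psum] and
    Minkowski's inequality. *)
Lemma pvar_subadd r p z a b s u t : 1 <= p -> a <= s -> s <= u -> u <= t -> t <= b ->
  bound (psums r p z a b) ->
  pvar_semi r p z s t <= pvar_semi r p z s u + pvar_semi r p z u t.
Proof.
  intros. apply pvar_le; try lra. apply Rplus_le_le_0_compat; apply pvar_nonneg.
  intros l Hl.
  destruct (split_psum r p z a b H H4 l s t u H0 H3 Hl ltac:(lra)) as [A [al [B [be [r' [HA [Hal [HB [Hbe [K1 [K2 [K5 _]]]]]]]]]]]].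
  set (L := (rpow A (1/p), 0) :: (al, be) :: (0, rpow B (1/p)) :: nil).
  assert (Hp0 : 0 < p) by lra.
  pose proof (minkowski p L fst snd (pvar_semi r p z s u) (pvar_semi r p z u t) H) as H6.
  unfold L in H6; simpl in H6.
  assert (E1: rpow (rpow A (1/p)) p = A) by (apply rpow_inv'; auto).
  assert (E2: rpow (rpow B (1/p)) p = B) by (apply rpow_inv'; auto).
  rewrite !rpow_0, !Rplus_0_r, !Rplus_0_l in H6.
  rewrite (pvar_pow r p z a b s u), (pvar_pow r p z a b u t) in H6 by (auto; lra).
  assert (HH : rpow (rpow A (1 / p)) p + (rpow (al + be) p + rpow (rpow B (1 / p)) p) <=
     rpow (pvar_semi r p z s u + pvar_semi r p z u t) p).
  { apply H6.
    - intros i Hi. destruct Hi as [<-|[<-|[<-|[]]]]; simpl; auto; try lra; apply rpow_nonneg.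
    - intros i Hi. destruct Hi as [<-|[<-|[<-|[]]]]; simpl; auto; try lra; apply rpow_nonneg.
    - apply pvar_nonneg.
    - apply pvar_nonneg.
    - rewrite E1. lra.
    - rewrite E2. lra. }
  rewrite E1, E2 in HH. lra.
Qed.

Lemma pvar_le_block_sum r p z a b (T : nat -> R) : 1 <= p -> bound (psums r p z a b) ->
  (forall k, a <= T k <= b) -> (forall k, T k <= T (S k)) ->
  forall k, pvar_semi r p z (T O) (T k) <= sumR k (fun j => pvar_semi r p z (T j) (T (S j))).
Proof.
  intros Hp Hbd HTr HT. induction k as [|k IH].
  { simpl. rewrite pvar_self. lra. }
  assert (HT0 : T O <= T k) by (clear - HT; induction k; [lra | specialize (HT k); lra]).
  destruct (HTr O), (HTr k), (HTr (S k)).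
  pose proof (pvar_subadd r p z a b (T O) (T k) (T (S k)) Hp ltac:(lra) HT0 (HT k) ltac:(lra) Hbd).
  simpl. lra.
Qed.

(** From increments to p-variation: if [||z_w - z_v|| <= (G w - G v) + c0 |||x|||_[v,w]]
    on [[u,r]] with [G] nondecreasing, then by Minkowski's inequality and the
    superadditivity of the control of [x],
    [|||z|||_[u,r] <= (G r - G u) + c0 |||x|||_[u,r]]. *)
Lemma pvar_of_increment_bound rz rx p (z xx : R -> vec) a b u r (G : R -> R) c0 :
  1 <= p -> bound (psums rx p xx a b) -> a <= u -> u <= r -> r <= b -> 0 <= c0 ->
  (forall v w, u <= v -> v < w -> w <= r -> G v <= G w) ->
  (forall v w, u <= v -> v < w -> w <= r ->
     vnorm rz (vsub (z w) (z v)) <= G w - G v + c0 * pvar_semi rx p xx v w) ->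
  pvar_semi rz p z u r <= G r - G u + c0 * pvar_semi rx p xx u r.
Proof.
  intros Hp Hbx Hau Hur Hrb Hc0 HGmon Hinc.
  assert (HW : 0 <= G r - G u) by (destruct (Req_dec u r); [subst; lra | pose proof (HGmon u r); lra]).
  apply pvar_le; [lra | auto | pose proof (pvar_nonneg rx p xx u r); nra |].
  intros l [Hc Hlast]. rewrite psum_pieces.
  set (P := pieces u l).
  set (al := fun pr : R*R => G (snd pr) - G (fst pr)).
  set (be := fun pr : R*R => c0 * pvar_semi rx p xx (fst pr) (snd pr)).
  assert (Hin : forall pr, In pr P -> u <= fst pr /\ fst pr < snd pr /\ snd pr <= r)
    by (intros; rewrite <- Hlast; apply pieces_in; auto).
  assert (Hal : forall pr, In pr P -> 0 <= al pr)
    by (intros pr Hpr; destruct (Hin pr Hpr) as [Q1 [Q2 Q3]]; unfold al; pose proof (HGmon _ _ Q1 Q2 Q3); lra).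
  apply Rle_trans with (lsum (map (fun pr => rpow (al pr + be pr) p) P)).
  { apply lsum_le. intros pr Hpr. destruct (Hin pr Hpr) as [Q1 [Q2 Q3]].
    apply rpow_mono; [lra | split; [apply vnorm_nonneg | apply Hinc; lra]]. }
  apply minkowski; auto; try lra.
  - intros pr Hpr. unfold be. apply Rmult_le_pos; auto. apply pvar_nonneg.
  - apply Rmult_le_pos; auto. apply pvar_nonneg.
  - eapply Rle_trans. { apply lsum_superadd; auto; lra. }
    unfold al, P. rewrite pieces_tele, Hlast. lra.
  - apply Rle_trans with (lsum (map (fun pr => rpow c0 p * pctrl rx p xx (fst pr) (snd pr)) P)).
    { apply lsum_le. intros pr Hpr. destruct (Hin pr Hpr) as [Q1 [Q2 Q3]]. unfold be.
      rewrite rpow_mul by (auto; apply pvar_nonneg). rewrite (pvar_pow rx p xx a b); auto; lra. }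
    rewrite lsum_scal. unfold P. rewrite <- pair_sum_pieces.
    pose proof (pair_sum_pctrl rx p xx a b l u r Hp Hbx Hau Hrb (conj Hc Hlast)).
    rewrite rpow_mul by (auto; apply pvar_nonneg). rewrite (pvar_pow rx p xx a b) by (auto; lra).
    apply Rmult_le_compat_l; auto. apply rpow_nonneg.
Qed.

Definition cont_on r (z : R -> vec) a b := forall t, a <= t <= b -> forall eps, 0 < eps -> exists delta, 0 < delta /\
     forall s, a <= s <= b -> Rabs (s - t) < delta -> vnorm r (vsub (z s) (z t)) < eps.

Lemma pw_close r p z a b u v w eta : 1 <= p -> bound (psums r p z a b) -> a <= u <= b ->
  a <= v <= b -> a <= w <= b ->
  vnorm r (vsub (z v) (z w)) <= eta ->
  Rabs (rpow (vnorm r (vsub (z u) (z v))) p - rpow (vnorm r (vsub (z u) (z w))) p) <= p * rpow (pvar_semi r p z a b) (p-1) * eta.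
Proof.
  intros Hp Hbd Hu Hv Hw He. set (M := pvar_semi r p z a b).
  assert (forall s t, a <= s <= b -> a <= t <= b -> vnorm r (vsub (z s) (z t)) <= M).
  { intros. destruct (Rle_dec t s). eapply Rle_trans. apply (pvar_step r p z a b t s); auto; lra.
    apply (pvar_mono r p z a b a t b s); auto; lra.
    rewrite vnorm_vsub_sym. eapply Rle_trans. apply (pvar_step r p z a b s t); auto; lra.
    apply (pvar_mono r p z a b a s b t); auto; lra. }
  eapply Rle_trans. apply rpow_lip with (M := M); auto. split; [apply vnorm_nonneg|auto].
  split; [apply vnorm_nonneg|auto].
  apply Rmult_le_compat_l. apply Rmult_le_pos. lra. apply rpow_nonneg.
  eapply Rle_trans. apply vnorm_rev.
  replace (vsub (vsub (z u) (z v)) (vsub (z u) (z w))) with (vsub (z w) (z v)).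
  rewrite vnorm_vsub_sym; auto. apply functional_extensionality; intros; unfold vsub; ring.
Qed.

Lemma cont_close r p z a b t eps : 1 <= p -> bound (psums r p z a b) -> cont_on r z a b ->
  a <= t <= b -> 0 < eps ->
  exists delta, 0 < delta /\ forall s, a <= s <= b -> Rabs (s - t) < delta -> forall u, a <= u <= b ->
    Rabs (rpow (vnorm r (vsub (z u) (z s))) p - rpow (vnorm r (vsub (z u) (z t))) p) < eps.
Proof.
  intros Hp Hbd Hc Ht He. set (K := p * rpow (pvar_semi r p z a b) (p-1)).
  assert (HK : 0 <= K) by (apply Rmult_le_pos; [lra|apply rpow_nonneg]).
  destruct (Hc t Ht (eps / (K+1))) as [del [Hd Hdel]]. apply Rdiv_lt_0_compat; lra.
  exists del; split; auto. intros s Hs Hst u Hu.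
  eapply Rle_lt_trans. apply (pw_close r p z a b u s t (eps/(K+1))); auto. left. apply Hdel; auto.
  fold K. replace (K * (eps / (K+1))) with (eps * (K / (K+1))) by (field; lra).
  assert (K / (K+1) < 1) by (apply Rmult_lt_reg_r with (K+1); [lra|]; unfold Rdiv; rewrite Rmult_assoc, Rinv_l by lra; lra).
  nra.
Qed.

Lemma pctrl_right0 r p z a b s : 1 <= p -> bound (psums r p z a b) -> cont_on r z a b ->
  a <= s < b ->
  forall eps, 0 < eps -> exists delta, 0 < delta /\ forall h, 0 < h < delta -> s + h <= b -> pctrl r p z s (s+h) < eps.
Proof.
  intros Hp Hbd Hc Hs eps He. apply NNPP; intro C.
  assert (HA : forall t, s < t <= b -> eps <= pctrl r p z s t).
  { intros t Ht. apply NNPP; intro C2. apply C. exists (t - s). split. lra. intros h Hh Hb.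
    pose proof (pctrl_mono_r r p z a b s (s+h) t ltac:(lra) ltac:(lra) ltac:(lra) ltac:(lra) Hbd).
    lra. }
  set (E := fun w => exists t, s < t <= b /\ w = - pctrl r p z s t).
  assert (HEb : bound E). { exists 0. intros w [t [Ht Hw]]. subst. pose proof (HA t Ht). lra. }
  assert (HEn : exists w, E w). { exists (- pctrl r p z s b). exists b. split; auto; lra. }
  set (Lm := - Rsup E).
  assert (HLm : eps <= Lm). { unfold Lm. assert (Rsup E <= - eps). apply Rsup_le; auto.
  intros w [t [Ht Hw]]. subst. pose proof (HA t Ht). lra. lra. }
  assert (HLt : forall t, s < t <= b -> Lm <= pctrl r p z s t).
  { intros t Ht. unfold Lm. assert (- pctrl r p z s t <= Rsup E). apply Rsup_ub; auto.
    exists t; auto. lra. }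
  destruct (Rsup_approx E (Lm/4) HEb HEn ltac:(lra)) as [w [[t1 [Ht1 Hw]] Hw2]]. subst w.
  fold Lm in Hw2. replace (Rsup E) with (- Lm) in Hw2 by (unfold Lm; ring).
  assert (Hbd1 : bound (psums r p z s t1)) by (apply (psums_sub r p z a b); auto; lra).
  destruct (Rsup_approx (psums r p z s t1) (Lm/4) Hbd1 (psums_ne r p z s t1 ltac:(lra)) ltac:(lra)) as [v [[l [Hl Hv]] Hv2]].
  subst v. fold (pctrl r p z s t1) in Hv2.
  destruct l as [|c1 l']. { destruct Hl as [_ Hl]. simpl in Hl. lra. }
  destruct (part_cons _ _ _ _ Hl) as [Hc1 Hl'].
  pose proof (part_le _ _ _ Hl') as Hc1t.
  destruct (cont_close r p z a b s (Lm/4) Hp Hbd Hc ltac:(lra) ltac:(lra)) as [del [Hdel Hcl]].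
  set (s' := s + Rmin del (c1 - s) / 2).
  assert (Hs' : s < s' < c1). { unfold s'. pose proof (Rmin_l del (c1 - s)).
  pose proof (Rmin_r del (c1 - s)).
     assert (0 < Rmin del (c1 - s)) by (apply Rmin_pos; lra). lra. }
  assert (Hss : Rabs (s' - s) < del). { unfold s'. rewrite Rabs_right.
  pose proof (Rmin_l del (c1 - s)).
     assert (0 < Rmin del (c1 - s)) by (apply Rmin_pos; lra). lra.
     assert (0 < Rmin del (c1 - s)) by (apply Rmin_pos; lra). lra. }
  specialize (Hcl s' ltac:(lra) Hss c1 ltac:(lra)).
  assert (Hl2 : is_partition s' t1 (c1 :: l')) by (apply part_cons'; auto; lra).
  pose proof (pctrl_ub r p z s' t1 _ ltac:(apply (psums_sub r p z a b); auto; lra) Hl2).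
  simpl in H, Hv2. apply Rabs_def2 in Hcl.
  pose proof (HLt s' ltac:(lra)).
  pose proof (pctrl_superadd r p z a b s s' t1 ltac:(lra) ltac:(lra) ltac:(lra) ltac:(lra) Hbd).
  lra.
Qed.

Lemma pctrl_left r p z a b s t : 1 <= p -> bound (psums r p z a b) -> cont_on r z a b -> a <= s ->
  s < t -> t <= b ->
  forall eps, 0 < eps -> exists delta, 0 < delta /\ forall t', t - delta < t' <= t -> s <= t' -> pctrl r p z s t - eps < pctrl r p z s t'.
Proof.
  intros Hp Hbd Hc Hs Hst Htb eps He.
  assert (Hbd1 : bound (psums r p z s t)) by (apply (psums_sub r p z a b); auto; lra).
  destruct (Rsup_approx (psums r p z s t) (eps/2) Hbd1 (psums_ne r p z s t ltac:(lra)) ltac:(lra)) as [v [[l [Hl Hv]] Hv2]].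
  subst v. fold (pctrl r p z s t) in Hv2.
  destruct l as [|c1 l']. { destruct Hl as [_ Hl]. simpl in Hl. lra. }
  destruct (exists_last (l := c1 :: l') ltac:(congruence)) as [l0 [t2 E]]. rewrite E in Hl, Hv2.
  destruct Hl as [Hch Hlast]. rewrite last_app in Hlast. simpl in Hlast. subst t2.
  destruct (chain_app_inv _ _ _ Hch) as [Hch0 Hch1]. set (c := last l0 s) in *. simpl in Hch1.
  destruct Hch1 as [Hct _].
  pose proof (chain_le_last s l0 Hch0) as Hsc. fold c in Hsc.
  rewrite psum_app in Hv2. fold c in Hv2. simpl in Hv2.
  destruct (cont_close r p z a b t (eps/2) Hp Hbd Hc ltac:(lra) ltac:(lra)) as [del [Hdel Hcl]].
  exists (Rmin del (t - c)). split. apply Rmin_pos; lra. intros t' Ht' Hst'.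
  pose proof (Rmin_l del (t-c)). pose proof (Rmin_r del (t-c)).
  assert (Hpart : is_partition s t' (l0 ++ t' :: nil)).
  { split. apply chain_app; auto. fold c. simpl. split; auto; lra. rewrite last_app. auto. }
  pose proof (pctrl_ub r p z s t' _ ltac:(apply (psums_sub r p z a b); auto; lra) Hpart).
  rewrite psum_app in H1. fold c in H1. simpl in H1.
  specialize (Hcl t' ltac:(lra) ltac:(rewrite Rabs_left1; lra) c ltac:(lra)).
  rewrite !(vnorm_vsub_sym r (z c)) in Hcl. apply Rabs_def2 in Hcl. lra.
Qed.

Lemma pctrl_right r p z a b s t : 1 <= p -> bound (psums r p z a b) -> cont_on r z a b -> a <= s ->
  s <= t -> t < b ->
  forall eps, 0 < eps -> exists delta, 0 < delta /\ forall t', t <= t' < t + delta -> t' <= b -> pctrl r p z s t' < pctrl r p z s t + eps.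
Proof.
  intros Hp Hbd Hc Hs Hst Htb eps He.
  set (M := pvar_semi r p z a b). set (C := p * rpow (2*M) (p-1)).
  assert (HM : 0 <= M) by apply pvar_nonneg.
  assert (HC : 0 <= C) by (apply Rmult_le_pos; [lra|apply rpow_nonneg]).
  destruct (pctrl_right0 r p z a b t Hp Hbd Hc ltac:(lra) (eps/2) ltac:(lra)) as [d1 [Hd1 H1]].
  destruct (Hc t ltac:(lra) (eps/(2*(C+1))) ltac:(apply Rdiv_lt_0_compat; lra)) as [d2 [Hd2 H2]].
  exists (Rmin d1 d2). split. apply Rmin_pos; lra. intros t' Ht' Htb'.
  pose proof (Rmin_l d1 d2). pose proof (Rmin_r d1 d2).
  assert (Hott : pctrl r p z t t' < eps/2).
  { destruct (Req_dec t' t). subst. rewrite pctrl_self. lra. replace t' with (t + (t'-t)) by ring.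
    apply H1; try lra. }
  assert (Hle : pctrl r p z s t' <= pctrl r p z s t + pctrl r p z t t' + C * (eps/(2*(C+1)))).
  { apply pctrl_le. lra. intros l Hl.
    destruct (split_psum r p z a b Hp Hbd l s t' t Hs Htb' Hl ltac:(lra)) as [A [al [B [be [r' [HA [Hal [HB [Hbe [K1 [K2 [K3 [K4 K5]]]]]]]]]]]]].
    assert (Hbe2 : be < eps/(2*(C+1))). { rewrite K5. apply H2. lra. rewrite Rabs_right; lra. }
    assert (Hal2 : al <= M).
    { assert (rpow al p <= pctrl r p z s t) by (pose proof (rpow_nonneg al p); lra).
      rewrite <- (rpow_inv al p) by (auto; lra). eapply Rle_trans. apply rpow_mono.
      left; apply Rdiv_lt_0_compat; lra.
      split. apply rpow_nonneg. apply H3. rewrite <- pvar_pctrl.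
      apply (pvar_mono r p z a b a s b t); auto; lra. }
    assert (Hbe3 : be <= M). { rewrite K5. eapply Rle_trans.
    apply (pvar_step r p z a b t r'); auto; lra. apply (pvar_mono r p z a b a t b r'); auto; lra. }
    pose proof (tangent p al (al+be) Hp Hal ltac:(lra)).
    assert (rpow (al+be) (p-1) <= rpow (2*M) (p-1)) by (apply rpow_mono; lra).
    assert (p * rpow (al+be) (p-1) * be <= C * be).
    { unfold C. apply Rmult_le_compat_r; auto. apply Rmult_le_compat_l; lra. }
    assert (C * be <= C * (eps/(2*(C+1)))) by (apply Rmult_le_compat_l; lra).
    assert (B <= pctrl r p z t t') by (pose proof (rpow_nonneg be p); lra).
    assert (A + rpow al p <= pctrl r p z s t) by auto.
    replace (al - (al + be)) with (- be) in H5 by ring. lra. }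
  assert (C * (eps / (2 * (C + 1))) < eps/2).
  { replace (C * (eps / (2 * (C + 1)))) with (eps/2 * (C/(C+1))) by (field; lra).
    assert (C/(C+1) < 1) by (apply Rmult_lt_reg_r with (C+1); [lra|]; unfold Rdiv; rewrite Rmult_assoc, Rinv_l by lra; lra).
    nra. }
  lra.
Qed.

(** Intermediate value theorem for a function continuous on [[s,e]] only. *)
Lemma ivt_within (F : R -> R) s e c : s < e ->
  (forall t, s <= t <= e -> forall eps, 0 < eps -> exists delta, 0 < delta /\
     forall t', s <= t' <= e -> Rabs (t' - t) < delta -> Rabs (F t' - F t) < eps) ->
  F s < c -> c < F e -> exists t, s < t < e /\ F t = c.
Proof.
  intros Hse Hc Hs He.
  set (cl := fun t => Rmax s (Rmin e t)).
  assert (Hcl : forall t, s <= cl t <= e). { intros; unfold cl. split. apply Rmax_l. apply Rmax_lub.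
  lra. apply Rmin_l. }
  assert (Hcl2 : forall t t', Rabs (cl t' - cl t) <= Rabs (t' - t)).
  { intros. unfold cl, Rmax, Rmin.
    repeat destruct Rle_dec; unfold Rabs; repeat destruct Rcase_abs; lra. }
  assert (Hcl3 : forall t, s <= t <= e -> cl t = t). { intros. unfold cl, Rmax, Rmin.
  repeat destruct Rle_dec; lra. }
  set (G := fun t => F (cl t) - c).
  assert (HG : continuity G).
  { intros t. unfold continuity_pt, continue_in, limit1_in, limit_in. intros eps Heps.
    destruct (Hc (cl t) (Hcl t) eps Heps) as [del [Hd Hdel]]. exists del. split; auto.
    intros t' [_ Ht']. simpl in *. unfold R_dist in *. unfold G.
    replace (F (cl t') - c - (F (cl t) - c)) with (F (cl t') - F (cl t)) by ring.
    apply Hdel. auto. eapply Rle_lt_trans. apply Hcl2. auto. }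
  destruct (IVT G s e HG Hse) as [t [Ht Hzt]].
  unfold G. rewrite Hcl3 by lra. lra. unfold G. rewrite Hcl3 by lra. lra.
  unfold G in Hzt. rewrite Hcl3 in Hzt by lra.
  exists t. split. split. destruct (Req_dec t s). subst. lra. lra. destruct (Req_dec t e). subst.
  lra. lra. lra.
Qed.

Lemma pctrl_cont r p z a b s e : 1 <= p -> bound (psums r p z a b) -> cont_on r z a b -> a <= s ->
  s <= e -> e <= b ->
  forall t, s <= t <= e -> forall eps, 0 < eps -> exists delta, 0 < delta /\
     forall t', s <= t' <= e -> Rabs (t' - t) < delta -> Rabs (pctrl r p z s t' - pctrl r p z s t) < eps.
Proof.
  intros Hp Hbd Hc Hs Hse Heb t Ht eps He.
  assert (HL : exists d1, 0 < d1 /\ forall t', s <= t' <= t -> t - d1 < t' -> pctrl r p z s t - eps < pctrl r p z s t').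
  { destruct (Req_dec t s). subst. exists 1. split. lra. intros. assert (t' = s) by lra. subst. lra.
    destruct (pctrl_left r p z a b s t Hp Hbd Hc Hs ltac:(lra) ltac:(lra) eps He) as [d1 [Hd1 H1]].
    exists d1. split; auto. intros; apply H1; lra. }
  assert (HR : exists d2, 0 < d2 /\ forall t', t <= t' <= e -> t' < t + d2 -> pctrl r p z s t' < pctrl r p z s t + eps).
  { destruct (Req_dec t b). subst. exists 1. split. lra. intros. assert (t' = b) by lra. subst. lra.
    destruct (pctrl_right r p z a b s t Hp Hbd Hc Hs ltac:(lra) ltac:(lra) eps He) as [d2 [Hd2 H2]].
    exists d2. split; auto. intros; apply H2; lra. }
  destruct HL as [d1 [Hd1 H1]]. destruct HR as [d2 [Hd2 H2]].
  exists (Rmin d1 d2). split. apply Rmin_pos; lra. intros t' Ht' Hd.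
  pose proof (Rmin_l d1 d2). pose proof (Rmin_r d1 d2).
  destruct (Rle_dec t' t).
  - rewrite Rabs_left1 in Hd by lra. specialize (H1 t' ltac:(lra) ltac:(lra)).
    pose proof (pctrl_mono_r r p z a b s t' t ltac:(lra) ltac:(lra) ltac:(lra) ltac:(lra) Hbd).
    rewrite Rabs_left1 by lra. lra.
  - rewrite Rabs_right in Hd by lra. specialize (H2 t' ltac:(lra) ltac:(lra)).
    pose proof (pctrl_mono_r r p z a b s t t' ltac:(lra) ltac:(lra) ltac:(lra) ltac:(lra) Hbd).
    rewrite Rabs_right by lra. lra.
Qed.

(** The greedy step is well defined: [s <= next(s) <= b] and
    [|||x|||_[s, next(s)] <= gamma], by continuity of the control. *)
Lemma greedy_ok r p gam z a b s : 1 < p -> 0 < gam -> bound (psums r p z a b) -> cont_on r z a b ->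
  a <= s <= b ->
  s <= greedy_next r p gam z b s <= b /\ pvar_semi r p z s (greedy_next r p gam z b s) <= gam.
Proof.
  intros Hp Hg Hbd Hc Hs.
  set (E := fun t => s < t <= b /\ pvar_semi r p z s t = gam).
  assert (Key : forall ts, s <= ts <= b -> (forall t, E t -> ts <= t) -> pvar_semi r p z s ts <= gam).
  { intros ts Hts HE. apply NNPP; intro C. apply Rnot_le_lt in C.
    assert (Hom : rpow gam p < pctrl r p z s ts).
    { apply Rnot_le_lt. intro C2. assert (pvar_semi r p z s ts <= gam); [|lra].
      rewrite pvar_pctrl. rewrite <- (rpow_inv gam p) by lra. apply rpow_mono.
      left; apply Rdiv_lt_0_compat; lra.
      split; auto. apply pctrl_nonneg. lra. apply (psums_sub r p z a b); auto; lra. }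
    assert (Hsts : s < ts). { destruct (Req_dec s ts); [|lra]. subst. rewrite pvar_self in C. lra. }
    destruct (ivt_within (pctrl r p z s) s ts (rpow gam p) Hsts) as [t [Ht Hot]].
    - apply (pctrl_cont r p z a b s ts); auto; lra.
    - rewrite pctrl_self. apply rpow_pos'; auto.
    - auto.
    - assert (E t). { split. lra. rewrite pvar_pctrl, Hot. apply rpow_inv; lra. }
      specialize (HE t H). lra. }
  unfold greedy_next. fold E.
  destruct (excluded_middle_informative (exists t, E t)) as [[t0 Ht0]|Hn].
  - set (E' := fun x => E (-x)).
    assert (HE'b : bound E'). { exists (-s). intros x [Hx _]. lra. }
    assert (HE'n : exists x, E' x). { exists (-t0). unfold E'. rewrite Ropp_involutive. auto. }
    assert (Hinf1 : s <= Rinf E). { unfold Rinf. fold E'. assert (Rsup E' <= -s).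
    apply Rsup_le; auto. intros x [Hx _]. lra. lra. }
    assert (Hinf2 : forall t, E t -> Rinf E <= t). { intros t Ht. unfold Rinf. fold E'.
    assert (-t <= Rsup E'). apply Rsup_ub; auto. unfold E'. rewrite Ropp_involutive; auto. lra. }
    assert (s <= Rmin (Rinf E) b <= b). { split. apply Rmin_glb; lra. apply Rmin_r. }
    split; auto. apply Key; auto. intros t Ht. eapply Rle_trans. apply Rmin_l. auto.
  - split. lra. apply Key. lra. intros t Ht. exfalso; apply Hn; eauto.
Qed.

Lemma tau_range r p gam z a b k :
  1 < p -> 0 < gam -> bound (psums r p z a b) -> cont_on r z a b -> a <= b ->
  a <= tau r p gam z a b k <= b.
Proof.
  intros. induction k. simpl; lra. simpl.
  pose proof (greedy_ok r p gam z a b (tau r p gam z a b k) H H0 H1 H2 IHk). lra.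
Qed.

Lemma tau_step r p gam z a b k :
  1 < p -> 0 < gam -> bound (psums r p z a b) -> cont_on r z a b -> a <= b ->
  tau r p gam z a b k <= tau r p gam z a b (S k) /\
  pvar_semi r p z (tau r p gam z a b k) (tau r p gam z a b (S k)) <= gam.
Proof.
  intros. simpl.
  pose proof (greedy_ok r p gam z a b (tau r p gam z a b k) H H0 H1 H2 (tau_range r p gam z a b k H H0 H1 H2 H3)).
  destruct H4 as [H4 H5]; split; [lra|exact H5].
Qed.

Fixpoint triple_sum (F : R -> R -> R -> R) (t0 : R) (l : list R) : R :=
  match l with
  | t1 :: ((t2 :: _) as l') => F t0 t1 t2 + triple_sum F t1 l'
  | _ => 0
  end.

Lemma triple_sum_le1 G t0 l : (forall u v, 0 <= G u v) ->
  triple_sum (fun u v w => G u v) t0 l <= pair_sum G t0 l.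
Proof.
  revert t0; induction l; intros t0 HG. simpl; lra.
  destruct l as [|t2 l'']. simpl. pose proof (HG t0 a). lra.
  change (G t0 a + triple_sum (fun u v w => G u v) a (t2 :: l'') <= G t0 a + pair_sum G a (t2 :: l'')).
  specialize (IHl a HG). lra.
Qed.

Lemma triple_sum_le2 G t0 t1 l : (forall u v, 0 <= G u v) ->
  triple_sum (fun u v w => G v w) t0 (t1 :: l) <= pair_sum G t1 l.
Proof.
  revert t0 t1; induction l; intros t0 t1 HG. simpl; lra.
  change (G t1 a + triple_sum (fun u v w => G v w) t1 (a :: l) <= G t1 a + pair_sum G a l).
  specialize (IHl t1 a HG). lra.
Qed.

Lemma triple_sum_plus F1 F2 t0 l : triple_sum (fun u v w => F1 u v w + F2 u v w) t0 l = triple_sum F1 t0 l + triple_sum F2 t0 l.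
Proof.
  revert t0; induction l; intros. simpl; ring. destruct l as [|t2 l'']. simpl; ring.
  change (F1 t0 a t2 + F2 t0 a t2 + triple_sum (fun u v w => F1 u v w + F2 u v w) a (t2 :: l'') =
    F1 t0 a t2 + triple_sum F1 a (t2 :: l'') + (F2 t0 a t2 + triple_sum F2 a (t2 :: l''))). rewrite IHl. ring.
Qed.

Lemma triple_sum_scal F c t0 l : triple_sum (fun u v w => c * F u v w) t0 l = c * triple_sum F t0 l.
Proof.
  revert t0; induction l; intros. simpl; ring. destruct l as [|t2 l'']. simpl; ring.
  change (c * F t0 a t2 + triple_sum (fun u v w => c * F u v w) a (t2 :: l'') = c * (F t0 a t2 + triple_sum F a (t2 :: l''))).
  rewrite IHl. ring.
Qed.

Lemma triple_sum_choose F : forall l t0 Sm, (forall u v w, 0 <= F u v w) -> (2 <= length l)%nat ->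
  triple_sum F t0 l <= Sm ->
  exists l1 mid nxt l2, l = l1 ++ mid :: nxt :: l2 /\ F (last l1 t0) mid nxt <= Sm / INR (length l - 1).
Proof.
  induction l as [|t1 l IH]; intros t0 Sm HF Hlen HS. simpl in Hlen; lia.
  destruct l as [|t2 l'']. simpl in Hlen; lia.
  change (F t0 t1 t2 + triple_sum F t1 (t2 :: l'') <= Sm) in HS.
  destruct l'' as [|t3 l3].
  - exists nil, t1, t2, nil. split; auto. simpl. simpl in HS. replace (Sm / 1) with Sm by field.
    lra.
  - set (N := length (t1 :: t2 :: t3 :: l3)).
    assert (HN : (3 <= N)%nat) by (unfold N; simpl; lia).
    assert (HNr : 2 <= INR (N - 1)). { replace 2 with (INR 2) by (simpl; ring). apply le_INR. lia. }
    destruct (Rle_dec (F t0 t1 t2) (Sm / INR (N - 1))).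
    + exists nil, t1, t2, (t3 :: l3). split; auto.
    + apply Rnot_le_lt in n.
      assert (HS' : triple_sum F t1 (t2 :: t3 :: l3) <= Sm * INR (N - 2) / INR (N - 1)).
      { assert (INR (N - 2) = INR (N - 1) - 1). { replace (N-1)%nat with (Datatypes.S (N-2)) by lia.
        rewrite S_INR. ring. }
        rewrite H. unfold Rdiv in *.
        replace (Sm * (INR (N - 1) - 1) * / INR (N - 1)) with (Sm - Sm * / INR (N-1)) by (field; lra).
        lra. }
      destruct (IH t1 _ HF ltac:(simpl; lia) HS') as [l1 [mid [nxt [l2 [E Hb]]]]].
      exists (t1 :: l1), mid, nxt, l2. split. rewrite E; auto. rewrite last_cons.
      replace (length (t2 :: t3 :: l3) - 1)%nat with (N - 2)%nat in Hb by (unfold N; simpl; lia).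
      assert (0 < INR (N - 2)) by (apply lt_0_INR; lia).
      replace (Sm * INR (N - 2) / INR (N - 1) / INR (N - 2)) with (Sm / INR (N - 1)) in Hb by (field; lra).
      fold N. auto.
Qed.

(** The normalised triple sum
    [sum_i (w_y(t_(i-1),t_i)/w_y(s,t) + w_x(t_i,t_(i+1))/w_x(s,t))] is at most 2,
    each half being a sum of controls of disjoint pieces. *)
Lemma normalized_triple_sum_le2 d m p a b (y x : R -> vec) l s t : 1 <= p ->
  bound (psums d p y a b) -> bound (psums m p x a b) -> a <= s -> t <= b ->
  is_partition s t l -> (1 <= length l)%nat ->
  0 < pctrl d p y s t -> 0 < pctrl m p x s t ->
  triple_sum (fun u v w => / pctrl d p y s t * pctrl d p y u v + / pctrl m p x s t * pctrl m p x v w) s l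
    <= 2.
Proof.
  intros Hp Hby Hbx Has Htb Hl Hlen HAp HBp.
  set (A := pctrl d p y s t) in *. set (B := pctrl m p x s t) in *.
  rewrite triple_sum_plus, (triple_sum_scal (fun u v w => pctrl d p y u v)),
    (triple_sum_scal (fun u v w => pctrl m p x v w)).
  pose proof (triple_sum_le1 (pctrl d p y) s l (pctrl_nonneg_any d p y)).
  pose proof (pair_sum_pctrl d p y a b l s t Hp Hby Has Htb Hl).
  destruct l as [|t1 l']. { simpl in Hlen; lia. }
  pose proof (triple_sum_le2 (pctrl m p x) s t1 l' (pctrl_nonneg_any m p x)).
  pose proof (pair_sum_pctrl m p x a b (t1 :: l') s t Hp Hbx Has Htb Hl). simpl in H2.
  pose proof (pctrl_nonneg_any m p x s t1). fold A B in H0, H2.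
  assert (/A * triple_sum (fun u v w => pctrl d p y u v) s (t1 :: l') <= 1).
  { apply Rmult_le_reg_l with A; auto. rewrite <- Rmult_assoc, Rinv_r by lra. lra. }
  assert (/B * triple_sum (fun u v w => pctrl m p x v w) s (t1 :: l') <= 1).
  { apply Rmult_le_reg_l with B; auto. rewrite <- Rmult_assoc, Rinv_r by lra. lra. }
  lra.
Qed.

(** Point-removal choice (Young): in a partition with [N+1 >= 2] points of
    [[s,t]] there are consecutive points [prev < mid < nxt] with
    [w_y(prev,mid) w_x(mid,nxt) <= w_y(s,t) w_x(s,t) / N^2], since the
    normalised sums [w_y(t_(i-1),t_i)/w_y(s,t) + w_x(t_i,t_(i+1))/w_x(s,t)]
    add up to at most 2. *)
Lemma pctrl_triple_choice d m p a b (y x : R -> vec) l s t : 1 <= p ->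
  bound (psums d p y a b) -> bound (psums m p x a b) -> a <= s -> t <= b ->
  is_partition s t l -> (2 <= length l)%nat ->
  exists l1 mid nxt l2, l = l1 ++ mid :: nxt :: l2 /\
    pctrl d p y (last l1 s) mid * pctrl m p x mid nxt <=
      pctrl d p y s t * pctrl m p x s t * / (INR (length l - 1) ^ 2).
Proof.
  intros Hp Hby Hbx Has Htb Hl Hlen.
  set (A := pctrl d p y s t). set (B := pctrl m p x s t). set (K := INR (length l - 1)).
  assert (HA : 0 <= A) by apply pctrl_nonneg_any. assert (HB : 0 <= B) by apply pctrl_nonneg_any.
  assert (HK : 1 <= K) by (apply (le_INR 1); lia).
  assert (HK2 : 0 < / K ^ 2) by (apply Rinv_0_lt_compat, pow_lt; lra).
  assert (Hsub : forall l1 mid nxt l2, l = l1 ++ mid :: nxt :: l2 ->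
            pctrl d p y (last l1 s) mid <= A /\ pctrl m p x mid nxt <= B).
  { intros l1 mid nxt l2 E. rewrite E in Hl.
    destruct (decomp_facts _ _ _ _ _ _ Hl) as [F1 [F2 [F3 [F4 _]]]].
    split; [apply (pctrl_sub d p y a b) | apply (pctrl_sub m p x a b)]; auto; lra. }
  destruct (Req_dec (A * B) 0) as [HAB0 | HAB0].
  { (* degenerate case: one control vanishes, hence so does its restriction *)
    destruct l as [|t1 [|t2 l'']]; simpl in Hlen; try lia.
    exists nil, t1, t2, l''. split; auto.
    destruct (Hsub nil t1 t2 l'' eq_refl) as [S1 S2].
    pose proof (pctrl_nonneg_any d p y (last nil s) t1). pose proof (pctrl_nonneg_any m p x t1 t2).
    fold A B. rewrite HAB0, Rmult_0_l.
    destruct (Rmult_integral _ _ HAB0) as [E|E]; rewrite E in *; nra. }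
  assert (HAp : 0 < A) by (destruct (Req_dec A 0); [rewrite H, Rmult_0_l in HAB0|]; lra).
  assert (HBp : 0 < B) by (destruct (Req_dec B 0); [rewrite H, Rmult_0_r in HAB0|]; lra).
  set (F := fun u v w => / A * pctrl d p y u v + / B * pctrl m p x v w).
  assert (HF : forall u v w, 0 <= F u v w).
  { intros. unfold F. pose proof (pctrl_nonneg_any d p y u v).
    pose proof (pctrl_nonneg_any m p x v w).
    assert (0 < /A) by (apply Rinv_0_lt_compat; lra).
    assert (0 < /B) by (apply Rinv_0_lt_compat; lra). nra. }
  assert (Hts : triple_sum F s l <= 2)
    by (apply (normalized_triple_sum_le2 d m p a b y x l s t); auto; lia).
  destruct (triple_sum_choose F l s 2 HF Hlen Hts) as [l1 [mid [nxt [l2 [E Hb]]]]].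
  exists l1, mid, nxt, l2. split; auto. fold K in Hb.
  set (oy := pctrl d p y (last l1 s) mid) in *. set (ox := pctrl m p x mid nxt) in *.
  assert (Hoy : 0 <= oy) by apply pctrl_nonneg_any.
  assert (Hox : 0 <= ox) by apply pctrl_nonneg_any.
  unfold F in Hb. fold oy ox in Hb.
  assert (/A * oy * (/B * ox) <= (2/K)^2/4).
  { apply amgm; auto; apply Rmult_le_pos; auto; left; apply Rinv_0_lt_compat; lra. }
  replace ((2/K)^2/4) with (/ (K^2)) in H by (field; lra).
  replace (oy * ox) with (A * B * (/A * oy * (/B * ox))) by (field; lra).
  apply Rmult_le_compat_l; [apply Rmult_le_pos |]; lra.
Qed.

Lemma young_point_choice d m p a b (y x : R -> vec) l s t : 1 < p ->
  bound (psums d p y a b) -> bound (psums m p x a b) -> a <= s -> t <= b ->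
  is_partition s t l -> (2 <= length l)%nat ->
  exists l1 mid nxt l2, l = l1 ++ mid :: nxt :: l2 /\
    vnorm d (vsub (y mid) (y (last l1 s))) * vnorm m (vsub (x nxt) (x mid)) <=
      pvar_semi d p y s t * pvar_semi m p x s t * rpow (INR (length l - 1)) (-(2/p)).
Proof.
  intros Hp Hby Hbx Has Htb Hl Hlen.
  destruct (pctrl_triple_choice d m p a b y x l s t ltac:(lra) Hby Hbx Has Htb Hl Hlen)
    as [l1 [mid [nxt [l2 [E Hb]]]]].
  exists l1, mid, nxt, l2. split; auto.
  assert (HK : 1 <= INR (length l - 1)) by (apply (le_INR 1); lia).
  rewrite E in Hl. destruct (decomp_facts _ _ _ _ _ _ Hl) as [F1 [F2 [F3 [F4 _]]]].
  pose proof (pctrl_nonneg_any d p y (last l1 s) mid). pose proof (pctrl_nonneg_any m p x mid nxt).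
  pose proof (pctrl_nonneg_any d p y s t). pose proof (pctrl_nonneg_any m p x s t).
  assert (Hy : vnorm d (vsub (y mid) (y (last l1 s))) <= rpow (pctrl d p y (last l1 s) mid) (1/p))
    by (rewrite <- pvar_pctrl; apply (pvar_step d p y a b); auto; lra).
  assert (Hx : vnorm m (vsub (x nxt) (x mid)) <= rpow (pctrl m p x mid nxt) (1/p))
    by (rewrite <- pvar_pctrl; apply (pvar_step m p x a b); auto; lra).
  eapply Rle_trans.
  { apply Rmult_le_compat; [apply vnorm_nonneg | apply vnorm_nonneg | exact Hy | exact Hx]. }
  rewrite <- rpow_mul by auto. rewrite !pvar_pctrl, <- rpow_inv_sq by lra.
  rewrite <- !rpow_mul; try lra; try (left; apply Rinv_0_lt_compat, pow_lt; lra);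
    try (apply Rmult_le_pos; auto).
  apply rpow_mono; [left; apply Rdiv_lt_0_compat; lra |].
  split; [apply Rmult_le_pos; auto | exact Hb].
Qed.

Lemma rs_sum_app c H X t0 l1 l2 : rs_sum c H X t0 (l1 ++ l2) = vadd (rs_sum c H X t0 l1) (rs_sum c H X (last l1 t0) l2).
Proof.
  revert t0; induction l1; intros. simpl.
  apply functional_extensionality; intros; unfold vadd, vzero; ring.
  rewrite <- app_comm_cons, last_cons. simpl. rewrite IHl1.
  apply functional_extensionality; intros; unfold vadd; ring.
Qed.

(** Young-Loeve estimate for Riemann-Stieltjes sums, by successive removal of the
    points chosen by [young_point_choice]:
    [||S(g(y), x) - g(y_s)(x_t - x_s)|| <= C_g |||y||| |||x||| sum_(k<=N) k^(-2/p)]. *)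
Lemma young_loeve d m p a b (g : vec -> mat) Cg (y x : R -> vec) : 1 < p -> 0 <= Cg ->
  (forall u v w, vnorm d (mvmul m (msub (g u) (g v)) w) <= Cg * vnorm d (vsub u v) * vnorm m w) ->
  bound (psums d p y a b) -> bound (psums m p x a b) ->
  forall N l s t, length l = N -> a <= s -> t <= b -> is_partition s t l ->
  vnorm d (vsub (rs_sum m (fun r => g (y r)) x s l) (mvmul m (g (y s)) (vsub (x t) (x s)))) <=
    Cg * pvar_semi d p y s t * pvar_semi m p x s t * zeta_sum (2/p) (N - 1).
Proof.
  intros Hp HCg Hgl Hby Hbx. induction N as [N IH] using (well_founded_induction Wf_nat.lt_wf).
  intros l s t Hlen Has Htb Hl.
  assert (Hr : 0 <= Cg * pvar_semi d p y s t * pvar_semi m p x s t * zeta_sum (2/p) (N - 1)).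
  { repeat apply Rmult_le_pos; auto; try apply pvar_nonneg. apply zeta_sum_nonneg. }
  destruct l as [|t1 [|t2 l'']].
  - destruct Hl as [_ Hl]. simpl in Hl. subst t. simpl.
    rewrite (vnorm_ext d _ vzero). rewrite vnorm_vzero; auto. intros i _. unfold vsub, vzero, mvmul.
    replace (sumR m (fun j => g (y s) i j * (x s j - x s j))) with (sumR m (fun j => 0 * 0)).
    2: apply sumR_ext; intros; ring.
    rewrite sumR_scal. ring.
  - destruct Hl as [_ Hl]. simpl in Hl. subst t1. simpl.
    rewrite (vnorm_ext d _ vzero). rewrite vnorm_vzero; auto. intros i _. unfold vsub, vzero, vadd.
    ring.
  - set (l := t1 :: t2 :: l'') in *.
    destruct (young_point_choice d m p a b y x l s t Hp Hby Hbx Has Htb Hl ltac:(unfold l; simpl; lia)) as [l1 [mid [nxt [l2 [E Hb]]]]].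
    rewrite E in Hl. destruct (decomp_facts _ _ _ _ _ _ Hl) as [F1 [F2 [F3 [F4 Hl']]]].
    assert (Hlen' : length (l1 ++ nxt :: l2) = (N - 1)%nat). { rewrite <- Hlen, E.
    rewrite !length_app. simpl. lia. }
    specialize (IH (N-1)%nat ltac:(unfold l in Hlen; simpl in Hlen; lia) _ s t Hlen' Has Htb Hl').
    set (G := fun r => g (y r)) in *.
    set (prev := last l1 s) in *.
    assert (Hdiff : vsub (rs_sum m G x s l) (rs_sum m G x s (l1 ++ nxt :: l2)) = mvmul m (msub (G mid) (G prev)) (vsub (x nxt) (x mid))).
    { rewrite E, !rs_sum_app. fold prev. simpl. apply functional_extensionality; intro i.
      pose proof (f_equal (fun v => v i) (vsub_mvmul_gap m (G prev) (G mid) (x prev) (x mid) (x nxt))) as HH.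
      unfold vsub, vadd in *. simpl in *. lra. }
    eapply Rle_trans. apply (vnorm_sub_triangle d _ (rs_sum m G x s (l1 ++ nxt :: l2))).
    rewrite Hdiff. eapply Rle_trans. apply Rplus_le_compat_r. apply Hgl.
    fold G prev in Hb. rewrite E in Hb.
    replace (length (l1 ++ mid :: nxt :: l2) - 1)%nat with (N - 1)%nat in Hb by (rewrite <- Hlen, E; auto).
    replace (N - 1)%nat with (Datatypes.S (N - 2)) by (unfold l in Hlen; simpl in Hlen; lia).
    replace (N - 1 - 1)%nat with (N - 2)%nat in IH by lia.
    change (zeta_sum (2/p) (Datatypes.S (N - 2))) with (zeta_sum (2/p) (N-2) + rpow (INR (Datatypes.S (N-2))) (-(2/p))).
    replace (Datatypes.S (N - 2)) with (N - 1)%nat by (unfold l in Hlen; simpl in Hlen; lia).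
    assert (Cg * vnorm d (vsub (y mid) (y prev)) * vnorm m (vsub (x nxt) (x mid)) <=
       Cg * (pvar_semi d p y s t * pvar_semi m p x s t * rpow (INR (N - 1)) (- (2 / p)))).
    { rewrite Rmult_assoc. apply Rmult_le_compat_l; auto. }
    nra.
Qed.

Fixpoint uniform_points (t0 h : R) (N : nat) : list R :=
  match N with O => nil | S N' => (t0 + h) :: uniform_points (t0 + h) h N' end.

Lemma uniform_points_chain t0 h N : 0 < h -> chain_lt t0 (uniform_points t0 h N).
Proof.
  revert t0; induction N; simpl; intros; auto. split. lra. auto.
Qed.

Lemma uniform_points_last t0 h N : last (uniform_points t0 h N) t0 = t0 + INR N * h.
Proof.
  revert t0; induction N; intros. simpl; ring.
  change (last ((t0 + h) :: uniform_points (t0 + h) h N) t0 = t0 + INR (S N) * h).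
  rewrite last_cons, IHN, S_INR. ring.
Qed.

Lemma uniform_points_mesh t0 h N : 0 <= h -> mesh t0 (uniform_points t0 h N) <= h.
Proof.
  revert t0; induction N; simpl; intros. lra. apply Rmax_lub. lra. auto.
Qed.

Lemma mesh_app t0 l1 l2 : mesh t0 (l1 ++ l2) <= Rmax (mesh t0 l1) (mesh (last l1 t0) l2).
Proof.
  revert t0; induction l1; intros. simpl. apply Rmax_r.
  rewrite <- app_comm_cons, last_cons. simpl. apply Rmax_lub.
  eapply Rle_trans; [|apply Rmax_l]. apply Rmax_l.
  eapply Rle_trans. apply IHl1. apply Rmax_lub. eapply Rle_trans; [|apply Rmax_l]. apply Rmax_r.
  apply Rmax_r.
Qed.

Definition uniform_partition (t0 t1 : R) (N : nat) : list R :=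
  if Rlt_dec t0 t1 then uniform_points t0 ((t1 - t0) / INR N) N else nil.

Lemma uniform_partition_ok t0 t1 N : t0 <= t1 -> (1 <= N)%nat ->
  is_partition t0 t1 (uniform_partition t0 t1 N) /\ mesh t0 (uniform_partition t0 t1 N) <= (t1 - t0) / INR N.
Proof.
  intros. assert (0 < INR N) by (apply lt_0_INR; lia). unfold uniform_partition.
  destruct (Rlt_dec t0 t1).
  - split. split. apply uniform_points_chain. apply Rdiv_lt_0_compat; lra.
    rewrite uniform_points_last. field. lra.
    apply uniform_points_mesh. left; apply Rdiv_lt_0_compat; lra.
  - split. split; simpl; auto; lra. simpl. assert (t0 = t1) by lra. subst. unfold Rdiv.
    rewrite Rminus_diag, Rmult_0_l. lra.
Qed.

Lemma rs_diff d c H X a s t Is It : a <= s -> s <= t -> RS_integral d c H X a s Is ->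
  RS_integral d c H X a t It ->
  forall eps, 0 < eps -> exists Q, is_partition s t Q /\ vnorm d (vsub (rs_sum c H X s Q) (vsub It Is)) < eps.
Proof.
  intros Has Hst HIs HIt eps He.
  destruct (HIs (eps/2) ltac:(lra)) as [d1 [Hd1 H1]].
  destruct (HIt (eps/2) ltac:(lra)) as [d2 [Hd2 H2]].
  set (del := Rmin d1 d2). assert (Hdel : 0 < del) by (apply Rmin_pos; lra).
  destruct (INR_unbounded ((t - a) / del)) as [N0 HN0]. set (N := S N0).
  assert (HN : INR N0 < INR N) by (unfold N; rewrite S_INR; lra).
  assert (HNp : 0 < INR N) by (apply lt_0_INR; unfold N; lia).
  assert (Hm : (t - a) / INR N < del).
  { assert (t - a < del * INR N). { assert (Hq : (t-a)/del < INR N) by lra.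
    apply (Rmult_lt_compat_l del) in Hq; auto.
      replace (del * ((t-a)/del)) with (t-a) in Hq by (field; lra). lra. }
    apply Rmult_lt_reg_r with (INR N); auto.
    replace ((t-a)/INR N * INR N) with (t-a) by (field; lra). lra. }
  destruct (uniform_partition_ok a s N Has ltac:(unfold N; lia)) as [P1 M1].
  destruct (uniform_partition_ok s t N Hst ltac:(unfold N; lia)) as [P2 M2].
  exists (uniform_partition s t N). split; auto.
  assert (Hmesh1 : mesh a (uniform_partition a s N) < d1).
  { eapply Rle_lt_trans. apply M1. apply Rle_lt_trans with ((t-a)/INR N). unfold Rdiv.
    apply Rmult_le_compat_r. left; apply Rinv_0_lt_compat; lra. lra.
    eapply Rlt_le_trans. apply Hm. apply Rmin_l. }
  assert (P12 := part_app _ _ _ _ _ P1 P2).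
  assert (Hmesh2 : mesh a (uniform_partition a s N ++ uniform_partition s t N) < d2).
  { eapply Rle_lt_trans. apply mesh_app. destruct P1 as [_ E1]. rewrite E1. apply Rmax_lub_lt.
    eapply Rle_lt_trans. apply M1. apply Rle_lt_trans with ((t-a)/INR N). unfold Rdiv.
    apply Rmult_le_compat_r. left; apply Rinv_0_lt_compat; lra. lra.
    eapply Rlt_le_trans. apply Hm. apply Rmin_r.
    eapply Rle_lt_trans. apply M2. apply Rle_lt_trans with ((t-a)/INR N). unfold Rdiv.
    apply Rmult_le_compat_r. left; apply Rinv_0_lt_compat; lra. lra.
    eapply Rlt_le_trans. apply Hm. apply Rmin_r. }
  specialize (H1 _ P1 Hmesh1). specialize (H2 _ P12 Hmesh2).
  rewrite rs_sum_app in H2. destruct P1 as [_ E1]. rewrite E1 in H2.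
  replace (vsub (rs_sum c H X s (uniform_partition s t N)) (vsub It Is)) with
    (vsub (vsub (vadd (rs_sum c H X a (uniform_partition a s N)) (rs_sum c H X s (uniform_partition s t N))) It) (vsub (rs_sum c H X a (uniform_partition a s N)) Is)).
  eapply Rle_lt_trans. apply vnorm_vsub_le. lra.
  apply functional_extensionality; intros; unfold vsub, vadd; ring.
Qed.

Lemma rs_limit_bound d c H X a s t Is It M : a <= s -> s <= t -> RS_integral d c H X a s Is ->
  RS_integral d c H X a t It ->
  (forall Q, is_partition s t Q -> vnorm d (rs_sum c H X s Q) <= M) -> vnorm d (vsub It Is) <= M.
Proof.
  intros. apply le_eps. intros eps He.
  destruct (rs_diff d c H X a s t Is It H0 H1 H2 H3 eps He) as [Q [HQ HQ2]].
  specialize (H4 Q HQ). pose proof (vnorm_add_le d (vsub It Is) (rs_sum c H X s Q)).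
  rewrite vnorm_vsub_sym in HQ2. lra.
Qed.

Lemma drift_rs d (F : R -> vec) (Gm : R -> R) : forall l t0, chain_lt t0 l ->
  (forall u v, t0 <= u -> u < v -> v <= last l t0 -> (v - u) * vnorm d (F u) <= Gm v - Gm u) ->
  vnorm d (rs_sum 1 (fun s => fun i _ => F s i) (fun s => fun _ => s) t0 l) <= Gm (last l t0) - Gm t0.
Proof.
  induction l as [|t1 l IH]; intros t0 Hc Hg. simpl. rewrite vnorm_vzero. lra.
  destruct Hc as [H01 Hc]. rewrite last_cons in *. pose proof (chain_le_last _ _ Hc).
  simpl. eapply Rle_trans. apply vnorm_triangle.
  assert (E : mvmul 1 (fun i _ => F t0 i) (vsub (fun _ => t1) (fun _ => t0)) = fun i => (t1 - t0) * F t0 i).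
  { apply functional_extensionality; intros. unfold mvmul, vsub. simpl. ring. }
  rewrite E, vnorm_scal, Rabs_right by lra.
  assert (IH' := IH t1 Hc ltac:(intros; apply Hg; lra)).
  specialize (Hg t0 t1 ltac:(lra) H01 H).
  rewrite Rmult_comm. lra.
Qed.

Lemma drift_linear_growth d A f Cf v : lipschitz_f d f Cf ->
  vnorm d (vadd (mvmul d A v) (f v)) <= (opnorm d d A + Cf) * vnorm d v + vnorm d (f vzero).
Proof.
  intros Hf. eapply Rle_trans. apply vnorm_triangle.
  pose proof (opnorm_spec d d A v). pose proof (vnorm_add_le d (f v) (f vzero)).
  specialize (Hf v vzero).
  replace (vsub v vzero) with v in Hf
    by (apply functional_extensionality; intros; unfold vsub, vzero; ring).
  lra.
Qed.

Lemma g_le_sup_norm d m g : (exists M, forall u, opnorm d m (g u) <= M) ->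
  forall u, opnorm d m (g u) <= sup_norm_g d m g.
Proof.
  intros [M HM] u. unfold sup_norm_g. apply Rsup_ub; [|exists u; auto].
  exists M. intros s [v ->]. auto.
Qed.

Lemma sup_norm_g_nonneg d m g : (exists M, forall u, opnorm d m (g u) <= M) ->
  0 <= sup_norm_g d m g.
Proof.
  intros Hgb. eapply Rle_trans. apply (opnorm_nonneg d m (g vzero)). apply g_le_sup_norm; auto.
Qed.

Lemma g_lipschitz_apply d m g Cg : lipschitz_g d m g Cg ->
  forall u v w, vnorm d (mvmul m (msub (g u) (g v)) w) <= Cg * vnorm d (vsub u v) * vnorm m w.
Proof.
  intros Hg u v w. eapply Rle_trans. apply opnorm_spec.
  apply Rmult_le_compat_r. apply vnorm_nonneg. apply Hg.
Qed.

(** The comparison function of the bootstrap argument: it grows like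
    [C e^(2L(t-u))/2] up to [rho] and linearly with slope [B] afterwards. *)
Definition comparison_majorant (L C B u rho t : R) : R :=
  C * exp (2 * L * (Rmin t rho - u)) / 2 + B * Rmax t rho.

Lemma comparison_majorant_dominates (phi : R -> R) L C B u rho r : 0 < L -> 0 <= C -> u <= rho ->
  (forall l, u <= l <= r -> phi l <= B) ->
  (forall l, u <= l <= rho -> phi l <= L * C * exp (2 * L * (l - u))) ->
  forall l w, u <= l -> l < w -> w <= r ->
    (w - l) * phi l <= comparison_majorant L C B u rho w - comparison_majorant L C B u rho l.
Proof.
  intros HL HC Hur HB HE l w Hl Hlw Hwr. unfold comparison_majorant.
  assert (HB1 : phi l <= B) by (apply HB; lra).
  destruct (Rle_dec rho l) as [Hrl|Hrl].
  { rewrite (Rmin_right l rho), (Rmin_right w rho), (Rmax_left l rho), (Rmax_left w rho) by lra.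
    assert (0 <= w - l) by lra. nra. }
  apply Rnot_le_lt in Hrl. rewrite (Rmin_left l rho), (Rmax_right l rho) by lra.
  set (mm := Rmin w rho).
  assert (Hmm : l <= mm /\ mm <= w /\ Rmax w rho - rho = w - mm)
    by (unfold mm, Rmin, Rmax; destruct (Rle_dec w rho); lra).
  destruct Hmm as [Hm1 [Hm2 Hm3]].
  set (El := exp (2 * L * (l - u))). set (Em := exp (2 * L * (mm - u))).
  assert (Htan : El * (1 + 2 * L * (mm - l)) <= Em).
  { pose proof (exp_tangent (2*L) (l - u) (mm - u) ltac:(lra) ltac:(lra)).
    replace (2 * L * (mm - u - (l - u))) with (2 * L * (mm - l)) in H by ring. exact H. }
  assert (HEl : 0 < El) by apply exp_pos.
  assert (Hrise : (mm - l) * phi l <= C * (Em - El) / 2).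
  { apply Rle_trans with ((mm - l) * (L * C * El)).
    { apply Rmult_le_compat_l; [lra | apply HE; lra]. }
    assert (C * (El * (2 * L * (mm - l))) <= C * (Em - El)) by (apply Rmult_le_compat_l; lra).
    replace ((mm - l) * (L * C * El)) with (C * (El * (2 * L * (mm - l))) / 2) by field. lra. }
  assert (Hflat : (w - mm) * phi l <= B * (w - mm)) by (rewrite Rmult_comm; apply Rmult_le_compat_r; lra).
  replace (C * Em / 2 + B * Rmax w rho - (C * El / 2 + B * rho))
    with (C * (Em - El) / 2 + B * (Rmax w rho - rho)) by field.
  rewrite Hm3. replace ((w - l) * phi l) with ((mm - l) * phi l + (w - mm) * phi l) by ring.
  lra.
Qed.

Lemma interval_step_induction (P : R -> Prop) u v h : 0 < h -> u <= v -> P u ->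
  (forall rho, u <= rho <= v -> (forall l, u <= l <= rho -> P l) ->
     forall r, rho < r -> r <= v -> r <= rho + h -> P r) ->
  forall l, u <= l <= v -> P l.
Proof.
  intros Hh Huv Hu Hstep.
  assert (Ind : forall k l, u <= l <= Rmin (u + INR k * h) v -> P l).
  { induction k as [|k IHk]; intros l Hl.
    - simpl in Hl. rewrite Rmult_0_l, Rplus_0_r, Rmin_left in Hl by lra.
      replace l with u by lra. exact Hu.
    - set (rho := Rmin (u + INR k * h) v) in *.
      assert (Hrho : u <= rho <= v)
        by (unfold rho; split; [apply Rmin_glb; [pose proof (pos_INR k); nra | lra] | apply Rmin_r]).
      destruct (Rle_dec l rho) as [Hlr|Hlr]. { apply IHk; lra. }
      apply Rnot_le_lt in Hlr.
      assert (Hl2 : l <= v /\ l <= u + INR (S k) * h)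
        by (split; eapply Rle_trans; try apply Hl; [apply Rmin_r | apply Rmin_l]).
      assert (Hrho2 : rho = u + INR k * h)
        by (unfold rho in *; unfold Rmin in *; destruct (Rle_dec (u + INR k * h) v); lra).
      rewrite S_INR in Hl2.
      apply (Hstep rho Hrho IHk l); lra. }
  intros l Hl. destruct (INR_unbounded ((v - u) / h)) as [k Hk].
  assert (v <= u + INR k * h).
  { assert ((v - u) / h * h <= INR k * h) by (apply Rmult_le_compat_r; lra).
    replace ((v-u)/h*h) with (v - u) in H by (field; lra). lra. }
  apply (Ind k). rewrite Rmin_right by lra. lra.
Qed.

Lemma discrete_gronwall (Y V T : nat -> R) c al : 0 <= c -> 0 <= al ->
  (forall k, T k <= T (S k)) ->
  (forall k, Y (S k) <= Y k + V k) ->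
  (forall k, Y k + V k <= (Y k + c) * exp (al * (T (S k) - T k))) ->
  forall k, Y k <= Y O + sumR k V /\
            Y O + sumR k V <= (Y O + INR k * c) * exp (al * (T k - T O)).
Proof.
  intros Hc Hal HT HY HV.
  assert (Hexp1 : forall s t, s <= t -> 1 <= exp (al * (t - s))).
  { intros s t Hst. rewrite <- exp_0. destruct (Req_dec (al * (t - s)) 0) as [E|E].
    { rewrite E; lra. } left; apply exp_increasing. nra. }
  induction k as [|k [IH1 IH2]].
  { simpl. rewrite Rminus_diag, Rmult_0_r, exp_0. lra. }
  set (Phi := Y O + sumR k V) in *. set (Ek := exp (al * (T (S k) - T k))).
  assert (HEk : 1 <= Ek) by apply Hexp1, HT.
  assert (HT0 : T O <= T k) by (clear - HT; induction k; [lra | specialize (HT k); lra]).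
  assert (HE0 : 1 <= exp (al * (T k - T O))) by (apply Hexp1; lra).
  assert (HPS : Y O + sumR (S k) V = Phi + V k) by (unfold Phi; simpl; ring).
  assert (HVk : V k <= (Phi + c) * Ek - Phi).
  { specialize (HV k). fold Ek in HV.
    assert (Y k * (Ek - 1) <= Phi * (Ek - 1)) by (apply Rmult_le_compat_r; lra). nra. }
  split. { rewrite HPS. specialize (HY k). lra. }
  rewrite HPS.
  replace (exp (al * (T (S k) - T O))) with (exp (al * (T k - T O)) * Ek)
    by (unfold Ek; rewrite <- exp_plus; f_equal; ring).
  rewrite S_INR.
  assert (Phi + c <= (Y O + INR k * c + c) * exp (al * (T k - T O))) by nra.
  assert ((Phi + c) * Ek <= (Y O + INR k * c + c) * exp (al * (T k - T O)) * Ek)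
    by (apply Rmult_le_compat_r; lra).
  nra.
Qed.

Section SolutionEstimates.

Variables (d m : nat) (p a b : R) (A : mat) (f : vec -> vec) (g : vec -> mat) (Cf Cg : R)
  (x y : R -> vec).

Hypotheses (Hp : 1 < p < 2) (HCf : 0 < Cf) (HCg : 0 < Cg)
  (Hf : lipschitz_f d f Cf) (Hg : lipschitz_g d m g Cg)
  (Hgb : exists M, forall u, opnorm d m (g u) <= M)
  (Hbx : bound (psums m p x a b)) (Hby : bound (psums d p y a b))
  (Hsol : is_solution d m A f g x a b y).

Local Notation L := (opnorm d d A + Cf).
Local Notation F0 := (vnorm d (f vzero)).
Local Notation Gsup := (sup_norm_g d m g).
Local Notation X := (pvar_semi m p x).
Local Notation Y := (pvar_semi d p y).

Lemma L_pos : 0 < L.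
Proof.
  pose proof (opnorm_nonneg d d A). lra.
Qed.

Lemma young_integral_increment u s t r I2s I2t :
  a <= u -> u <= s -> s <= t -> t <= r -> r <= b ->
  RS_integral d m (fun s => g (y s)) x a s I2s -> RS_integral d m (fun s => g (y s)) x a t I2t ->
  vnorm d (vsub I2t I2s) <= (Gsup + (Kp p + 1) * Cg * Y u r) * X s t.
Proof.
  intros Hau Hus Hst Htr Hrb Hs Ht.
  apply (rs_limit_bound d m (fun s => g (y s)) x a s t); auto; try lra. intros Q HQ.
  pose proof (young_loeve d m p a b g Cg y x ltac:(lra) ltac:(lra) (g_lipschitz_apply d m g Cg Hg)
                Hby Hbx (length Q) Q s t eq_refl ltac:(lra) ltac:(lra) HQ) as HY.
  eapply Rle_trans. apply (vnorm_add_le d _ (mvmul m (g (y s)) (vsub (x t) (x s)))).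
  assert (Hfirst : vnorm d (mvmul m (g (y s)) (vsub (x t) (x s))) <= Gsup * X s t).
  { eapply Rle_trans. apply opnorm_spec.
    apply Rmult_le_compat; [apply opnorm_nonneg | apply vnorm_nonneg | apply g_le_sup_norm; auto |].
    apply (pvar_step m p x a b); auto; lra. }
  assert (HYmon : Y s t <= Y u r) by (apply (pvar_mono d p y a b); auto; lra).
  pose proof (zeta_sum_K p (length Q - 1) Hp). pose proof (zeta_sum_nonneg (2/p) (length Q - 1)).
  pose proof (pvar_nonneg d p y s t). pose proof (pvar_nonneg m p x s t).
  assert (Cg * Y s t * X s t * zeta_sum (2 / p) (length Q - 1) <= (Kp p + 1) * Cg * Y u r * X s t).
  { replace (Cg * Y s t * X s t * zeta_sum (2 / p) (length Q - 1))
      with ((Cg * X s t) * (Y s t * zeta_sum (2 / p) (length Q - 1))) by ring.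
    replace ((Kp p + 1) * Cg * Y u r * X s t) with ((Cg * X s t) * (Y u r * (Kp p + 1))) by ring.
    apply Rmult_le_compat_l; [nra | apply Rmult_le_compat; lra]. }
  lra.
Qed.

Lemma solution_increment u s t r (G : R -> R) :
  a <= u -> u <= s -> s <= t -> t <= r -> r <= b ->
  (forall v w, s <= v -> v < w -> w <= t -> (w - v) * (L * vnorm d (y v) + F0) <= G w - G v) ->
  vnorm d (vsub (y t) (y s)) <= (G t - G s) + (Gsup + (Kp p + 1) * Cg * Y u r) * X s t.
Proof.
  intros Hau Hus Hst Htr Hrb HG.
  destruct (Hsol s ltac:(lra)) as [I1s [I2s [Hs1 [Hs2 Hs3]]]].
  destruct (Hsol t ltac:(lra)) as [I1t [I2t [Ht1 [Ht2 Ht3]]]].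
  rewrite (vnorm_ext d _ (vadd (vsub I1t I1s) (vsub I2t I2s))).
  2: { intros i Hi. unfold vsub, vadd. rewrite Hs3, Ht3 by auto. ring. }
  eapply Rle_trans. apply vnorm_triangle. apply Rplus_le_compat.
  - apply (rs_limit_bound d 1 (fun s i _ => vadd (mvmul d A (y s)) (f (y s)) i) (fun s _ => s) a s t);
      auto; try lra.
    intros Q [HQ1 HQ2]. rewrite <- HQ2. apply drift_rs; auto.
    intros v w Hv Hvw Hw. rewrite HQ2 in Hw.
    pose proof (drift_linear_growth d A f Cf (y v) Hf).
    change (fun i : nat => vadd (mvmul d A (y v)) (f (y v)) i) with (vadd (mvmul d A (y v)) (f (y v))).
    eapply Rle_trans; [| apply HG; auto]. apply Rmult_le_compat_l; lra.
  - apply (young_integral_increment u s t r); auto.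
Qed.

(** Absorption on a small interval: when [(K+1) C_g |||x|||_[u,r] <= 1/2] the
    term in [|||y|||] on the right of [solution_increment] is absorbed, giving
    [|||y|||_[u,r] <= 2 (G r - G u + ||g||_oo |||x|||_[u,r])]. *)
Lemma solution_pvar_absorb u r (G : R -> R) :
  a <= u -> u <= r -> r <= b -> (Kp p + 1) * Cg * X u r <= 1/2 ->
  (forall v w, u <= v -> v < w -> w <= r -> (w - v) * (L * vnorm d (y v) + F0) <= G w - G v) ->
  Y u r <= 2 * (G r - G u + Gsup * X u r).
Proof.
  intros Hau Hur Hrb Hsmall HG.
  set (c0 := Gsup + (Kp p + 1) * Cg * Y u r).
  assert (HGs : 0 <= Gsup) by (apply sup_norm_g_nonneg; auto).
  pose proof (pvar_nonneg d p y u r). pose proof (pvar_nonneg m p x u r).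
  assert (HK : 0 < Kp p) by (apply Kp_bound; auto).
  assert (Hc0 : 0 <= c0)
    by (unfold c0; apply Rplus_le_le_0_compat; [lra | repeat apply Rmult_le_pos; lra]).
  assert (Hmain : Y u r <= (G r - G u) + c0 * X u r).
  { apply (pvar_of_increment_bound d m p y x a b); auto; try lra.
    - intros v w Hv Hvw Hw. specialize (HG v w Hv Hvw Hw).
      assert (0 <= L * vnorm d (y v) + F0)
        by (pose proof L_pos; pose proof (vnorm_nonneg d (y v));
            pose proof (vnorm_nonneg d (f vzero)); nra).
      nra.
    - intros v w Hv Hvw Hw. apply (solution_increment u v w r); auto; try lra.
      intros; apply HG; lra. }
  unfold c0 in Hmain.
  assert ((Kp p + 1) * Cg * Y u r * X u r <= Y u r / 2).
  { replace ((Kp p + 1) * Cg * Y u r * X u r) with (Y u r * ((Kp p + 1) * Cg * X u r)) by ring.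
    apply Rmult_le_compat_l; lra. }
  lra.
Qed.

Lemma comparison_step u v rho h eps :
  let C := vnorm d (y u) + F0 / L + 2 * Gsup * X u v + eps in
  a <= u -> u <= rho -> rho <= v -> v <= b -> 0 < eps -> 0 < h ->
  2 * (L * (vnorm d (y u) + Y u v) + F0) * h <= eps ->
  (Kp p + 1) * Cg * X u v <= 1/2 ->
  (forall l, u <= l <= rho -> vnorm d (y u) + Y u l <= C * exp (2 * L * (l - u)) - F0 / L) ->
  forall r, rho < r -> r <= v -> r <= rho + h ->
    vnorm d (y u) + Y u r <= C * exp (2 * L * (r - u)) - F0 / L.
Proof.
  intros C Hau Hur Hrv Hvb He Hh HBh Hsmall IH r Hr1 Hr2 Hr3.
  set (B := L * (vnorm d (y u) + Y u v) + F0) in *.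
  pose proof L_pos as HL.
  assert (HF : 0 <= F0) by apply vnorm_nonneg.
  assert (HGs : 0 <= Gsup) by (apply sup_norm_g_nonneg; auto).
  assert (HXv : 0 <= X u v) by apply pvar_nonneg.
  assert (HFL : 0 <= F0 / L) by (apply Rmult_le_pos; [lra | left; apply Rinv_0_lt_compat; lra]).
  assert (HC : 0 <= C) by (unfold C; pose proof (vnorm_nonneg d (y u)); nra).
  assert (Hyl_u : forall l, u <= l <= v -> vnorm d (y l) <= vnorm d (y u) + Y u l).
  { intros l Hl. apply (vnorm_le_pvar d p y a b); auto; lra. }
  assert (HyB : forall l, u <= l <= r -> L * vnorm d (y l) + F0 <= B).
  { intros l Hl. unfold B. apply Rplus_le_compat_r, Rmult_le_compat_l; [lra |].
    pose proof (Hyl_u l ltac:(lra)).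
    pose proof (pvar_mono d p y a b u u v l ltac:(lra) Hau ltac:(lra) ltac:(lra) ltac:(lra) Hvb Hby).
    lra. }
  assert (HyE : forall l, u <= l <= rho -> L * vnorm d (y l) + F0 <= L * C * exp (2 * L * (l - u))).
  { intros l Hl. pose proof (Hyl_u l ltac:(lra)). specialize (IH l Hl).
    assert (Hle : vnorm d (y l) <= C * exp (2 * L * (l - u)) - F0 / L) by lra.
    apply Rmult_le_compat_l with (r := L) in Hle; [| lra].
    replace (L * (C * exp (2 * L * (l - u)) - F0 / L)) with (L * C * exp (2 * L * (l - u)) - F0) in Hle
      by (field; lra).
    lra. }
  pose proof (comparison_majorant_dominates (fun l => L * vnorm d (y l) + F0) L C B u rho r HL HC Hur HyB HyE) as HG.
  assert (HXr : X u r <= X u v) by (apply (pvar_mono m p x a b u u v r); auto; lra).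
  assert (Hsm : (Kp p + 1) * Cg * X u r <= 1/2).
  { eapply Rle_trans; [| apply Hsmall]. apply Rmult_le_compat_l; auto.
    pose proof (Kp_bound p Hp). nra. }
  pose proof (solution_pvar_absorb u r (comparison_majorant L C B u rho) Hau ltac:(lra) ltac:(lra) Hsm HG) as K.
  unfold comparison_majorant in K.
  rewrite (Rmin_right r rho), (Rmax_left r rho), (Rmin_left u rho), (Rmax_right u rho) in K by lra.
  rewrite Rminus_diag, Rmult_0_r, exp_0 in K.
  assert (C * exp (2 * L * (rho - u)) <= C * exp (2 * L * (r - u))).
  { apply Rmult_le_compat_l; auto. left; apply exp_increasing. nra. }
  assert (B * (r - rho) <= B * h).
  { apply Rmult_le_compat_l; [| lra]. unfold B.
    pose proof (vnorm_nonneg d (y u)). pose proof (pvar_nonneg d p y u v). nra. }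
  assert (Gsup * X u r <= Gsup * X u v) by (apply Rmult_le_compat_l; auto).
  unfold C in *. lra.
Qed.

Lemma solution_bound_small_interval u v :
  a <= u -> u <= v -> v <= b -> (Kp p + 1) * Cg * X u v <= 1/2 ->
  vnorm d (y u) + Y u v <=
    (vnorm d (y u) + F0 / L + 2 * Gsup * X u v) * exp (2 * L * (v - u)).
Proof.
  intros Hau Huv Hvb Hsmall.
  set (c := vnorm d (y u) + F0 / L + 2 * Gsup * X u v).
  set (B := L * (vnorm d (y u) + Y u v) + F0).
  pose proof L_pos as HL.
  assert (HFL : 0 <= F0 / L)
    by (apply Rmult_le_pos; [apply vnorm_nonneg | left; apply Rinv_0_lt_compat; lra]).
  assert (HB : 0 <= B).
  { unfold B. pose proof (vnorm_nonneg d (y u)). pose proof (pvar_nonneg d p y u v).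
    pose proof (vnorm_nonneg d (f vzero)). nra. }
  assert (HEv : 0 < exp (2 * L * (v - u))) by apply exp_pos.
  assert (Key : forall eps, 0 < eps ->
            vnorm d (y u) + Y u v <= (c + eps) * exp (2 * L * (v - u)) - F0 / L).
  { intros eps He. set (h := eps / (2 * B + 1)).
    assert (Hh : 0 < h) by (apply Rdiv_lt_0_compat; lra).
    assert (HBh : 2 * B * h <= eps).
    { unfold h.
      replace (2 * B * (eps / (2 * B + 1))) with (eps * (2 * B / (2 * B + 1))) by (field; lra).
      assert (2 * B / (2 * B + 1) <= 1)
        by (apply Rmult_le_reg_r with (2 * B + 1); [lra | field_simplify; lra]).
      nra. }
    apply (interval_step_induction
             (fun l => vnorm d (y u) + Y u l <= (c + eps) * exp (2 * L * (l - u)) - F0 / L) u v h);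
      auto; try lra.
    - rewrite pvar_self, Rminus_diag, Rmult_0_r, exp_0.
      assert (0 <= 2 * Gsup * X u v).
      { pose proof (sup_norm_g_nonneg d m g Hgb). pose proof (pvar_nonneg m p x u v). nra. }
      unfold c. lra.
    - intros rho Hrho IH. apply (comparison_step u v rho h eps); auto; lra. }
  apply le_eps. intros eta Heta.
  specialize (Key (eta / exp (2 * L * (v - u))) ltac:(apply Rdiv_lt_0_compat; lra)).
  replace ((c + eta / exp (2 * L * (v - u))) * exp (2 * L * (v - u)))
    with (c * exp (2 * L * (v - u)) + eta) in Key by (field; lra).
  lra.
Qed.

(** On a greedy block ([|||x|||_[u,v] <= gamma]) the smallness condition of
    [solution_bound_small_interval] holds, since [(K+1) C_g gamma = 1/2]; with
    [Lambda = max(||f 0||/L, 2 ||g||_oo)] this gives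
    [||y_u|| + |||y|||_[u,v] <= (||y_u|| + Lambda (1 + |||x|||_[a,b])) e^(2L(v-u))]. *)
Lemma greedy_block_bound u v :
  a <= u -> u <= v -> v <= b -> X u v <= gammaG p Cg ->
  vnorm d (y u) + Y u v <=
    (vnorm d (y u) + Rmax (F0 / L) (2 * Gsup) * (1 + X a b)) * exp (2 * L * (v - u)).
Proof.
  intros Hau Huv Hvb Hgam.
  assert (HK : 0 < Kp p) by (apply Kp_bound; auto).
  assert (Hsmall : (Kp p + 1) * Cg * X u v <= 1/2).
  { replace (1/2) with ((Kp p + 1) * Cg * gammaG p Cg) by (unfold gammaG; field; lra).
    apply Rmult_le_compat_l; auto. nra. }
  eapply Rle_trans. { apply solution_bound_small_interval; auto. }
  apply Rmult_le_compat_r; [left; apply exp_pos |].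
  pose proof (Rmax_l (F0 / L) (2 * Gsup)). pose proof (Rmax_r (F0 / L) (2 * Gsup)).
  assert (HGs : 0 <= Gsup) by (apply sup_norm_g_nonneg; auto).
  assert (HXv : 0 <= X u v) by apply pvar_nonneg.
  assert (X u v <= X a b) by (apply (pvar_mono m p x a b); auto; lra).
  assert (2 * Gsup * X u v <= Rmax (F0 / L) (2 * Gsup) * X a b) by (apply Rmult_le_compat; lra).
  lra.
Qed.

(** Summing over consecutive blocks with [|||x||| <= gamma] starting at [a]:
    by the discrete Gronwall lemma and subadditivity of the p-variation,
    [||y_a|| + |||y|||_[a, T n] <= (||y_a|| + n Lambda (1 + |||x|||_[a,b])) e^(2L(T n - a))]. *)
Lemma blocks_bound (T : nat -> R) n :
  T O = a -> (forall k, a <= T k <= b) ->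
  (forall k, T k <= T (S k) /\ X (T k) (T (S k)) <= gammaG p Cg) ->
  vnorm d (y a) + Y a (T n) <=
    (vnorm d (y a) + Rmax (F0 / L) (2 * Gsup) * (1 + X a b) * INR n) * exp (2 * L * (T n - a)).
Proof.
  intros HT0 HTr HTs.
  set (c := Rmax (F0 / L) (2 * Gsup) * (1 + X a b)).
  assert (Hc : 0 <= c).
  { pose proof (sup_norm_g_nonneg d m g Hgb). pose proof (pvar_nonneg m p x a b).
    pose proof (Rmax_r (F0 / L) (2 * Gsup)). unfold c. nra. }
  assert (HL : 0 <= 2 * L) by (pose proof L_pos; lra).
  assert (Hstep : forall k, vnorm d (y (T (S k))) <= vnorm d (y (T k)) + Y (T k) (T (S k)))
    by (intros k; destruct (HTr k), (HTr (S k)), (HTs k); apply (vnorm_le_pvar d p y a b); auto; lra).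
  assert (Hblock : forall k, vnorm d (y (T k)) + Y (T k) (T (S k))
                             <= (vnorm d (y (T k)) + c) * exp (2 * L * (T (S k) - T k)))
    by (intros k; destruct (HTr k), (HTr (S k)), (HTs k); apply greedy_block_bound; auto; lra).
  destruct (discrete_gronwall (fun k => vnorm d (y (T k))) (fun k => Y (T k) (T (S k)))
              T c (2 * L) Hc HL (fun k => proj1 (HTs k)) Hstep Hblock n) as [_ Hgron].
  pose proof (pvar_le_block_sum d p y a b T ltac:(lra) Hby HTr (fun k => proj1 (HTs k)) n) as Hsub.
  rewrite HT0 in Hgron, Hsub.
  replace (Rmax (F0 / L) (2 * Gsup) * (1 + X a b) * INR n) with (INR n * c) by (unfold c; ring).
  lra.
Qed.

End SolutionEstimates.

Theorem corollary2p4
  (d m : nat) (Hd : (1 <= d)%nat) (Hm : (1 <= m)%nat)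
  (p : R) (Hp : 1 < p < 2) (a b : R) (Hab : a <= b)
  (A : mat) (f : vec -> vec) (g : vec -> mat) (Cf Cg : R)
  (HCf : 0 < Cf) (HCg : 0 < Cg)
  (Hf : lipschitz_f d f Cf) (Hg : lipschitz_g d m g Cg)
  (HDg : C1_Lip_deriv d m g)
  (Hgb : exists M, forall u, opnorm d m (g u) <= M)
  (x : R -> vec) (Hx : in_Cpvar m p x a b)
  (y : R -> vec) (Hy : in_Cpvar d p y a b) (Hsol : is_solution d m A f g x a b y)
  (n : nat) (HN : is_N m p (gammaG p Cg) x a b n) :
  let L := opnorm d d A + Cf in
  pvar_norm d p y a b <=
    (vnorm d (y a)
     + Rmax (vnorm d (f vzero) / L) (2 * sup_norm_g d m g)
       * (1 + pvar_semi m p x a b) * INR n)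
    * exp (2 * L * (b - a)) * rpow (INR n) ((p - 1) / p).
Proof.
  intros L. destruct Hx as [Hcx Hbx], Hy as [_ Hby], HN as [Hn1 [Hnb _]].
  assert (Hgam : 0 < gammaG p Cg)
    by (destruct (Kp_bound p Hp); unfold gammaG; apply Rdiv_lt_0_compat;
        [lra | repeat apply Rmult_lt_0_compat; lra]).
  pose proof (blocks_bound d m p a b A f g Cf Cg x y Hp HCf HCg Hf Hg Hgb Hbx Hby Hsol
                (tau m p (gammaG p Cg) x a b) n eq_refl
                ltac:(intros; apply tau_range; auto; lra)
                ltac:(intros; apply tau_step; auto; lra)) as Hblocks.
  rewrite Hnb in Hblocks. fold L in Hblocks.
  assert (Hn : 1 <= rpow (INR n) ((p - 1) / p))
    by (apply rpow_ge1; [apply (le_INR 1); auto | apply Rmult_le_pos; [lra | left; apply Rinv_0_lt_compat; lra]]).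
  unfold pvar_norm.
  set (E := exp (2 * L * (b - a))) in *.
  set (B := vnorm d (y a) + Rmax (vnorm d (f vzero) / L) (2 * sup_norm_g d m g)
                              * (1 + pvar_semi m p x a b) * INR n) in *.
  assert (0 <= vnorm d (y a) + pvar_semi d p y a b)
    by (pose proof (vnorm_nonneg d (y a)); pose proof (pvar_nonneg d p y a b); lra).
  nra.
Qed.
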